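(* Let $q>1$ and $0\le M_0<M$. Let $u$ be a sufficiently smooth $L$-periodic (in $x$) solution of $u_t=-\alpha u u_x+\beta u_{xxx}$ on $[0,T]\times\mathbb{R}$, and let $r>\sup_{t,x}|u(t,x)|$. Suppose $u^{(0)}_k=u(0,k\Delta x)$ for all $k$, that $u^{(0)},\dots,u^{(M_0)}$ are obtained successively as solutions of the scheme (each $u^{(n+1)}$ a solution at step $n$), that $r\ge \max_{m'\le M_0}\|u^{(m')}\|_\infty$, that $\Delta t<\min\{\varepsilon_1(q,r,\Delta x),\varepsilon_2(q,r,\Delta x)\}$, and let $u^{(M_0+1)}$ be the unique solution of the scheme at step $M_0$ with $\|u^{(M_0+1)}\|_\infty\le qr$ (which exists under these hypotheses). Then there is a constant $C=C(q,r)>0$ independent of $\Delta t$ and $\Delta x$ such that, for sufficiently small $\Delta t\le\Delta x$, $$\|e^{(m)}\|_{H^1} = \big(\|e^{(m)}\|^2+\|\delta^+_x e^{(m)}\|^2\big)^{1/2}\le C\big((\Delta t)^2+(\Delta x)^2\big)\qquad (m=0,1,\dots,M_0+1).$$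
   Context: $L>0$, $K$ a positive integer, $\Delta x=L/K$; $T>0$, $M$ a positive integer, $\Delta t=T/M$; $\alpha\in\mathbb{R}$, $\beta\in\mathbb{R}\setminus\{0\}$. Grid functions are real sequences $v=(v_k)_{k\in\mathbb{Z}}$ with $v_{k+K}=v_k$. Define $\delta^+_x v_k=(v_{k+1}-v_k)/\Delta x$, $\delta^{\langle 1\rangle}_x v_k = (v_{k+1}-v_{k-1})/(2\Delta x)$, $\delta^{\langle 2\rangle}_x v_k = (v_{k+1}-2v_k+v_{k-1})/(\Delta x)^2$, $\|v\|=(\sum_{k=1}^K v_k^2\Delta x)^{1/2}$, $\|v\|_\infty=\max_k|v_k|$. For a sequence of grid functions $v^{(n)}$, $\delta^+_t v^{(n)}_k = (v^{(n+1)}_k - v^{(n)}_k)/\Delta t$, $\mu^+_t v^{(n)}_k = (v^{(n+1)}_k+v^{(n)}_k)/2$. Given $u^{(n)}$, $u^{(n+1)}$ is a solution of the scheme at step $n$ if for all $k$ $$\delta^+_t u^{(n)}_k = -\frac{\alpha}{6}\,\delta^{\langle 1\rangle}_x\Big\{(u^{(n+1)}_k)^2 + u^{(n+1)}_k u^{(n)}_k + (u^{(n)}_k)^2\Big\} + \beta\,\delta^{\langle 1\rangle}_x\delta^{\langle 2\rangle}_x \mu^+_t u^{(n)}_k .$$ $\varepsilon_1(q,r,\Delta x) = (q-1)(\Delta x)^3[\frac{|\alpha|}{6}(\Delta x)^2(q^2+q+1)r + \frac{3}{2}|\beta|(q+1)]^{-1}$, $\varepsilon_2(q,r,\Delta x)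 = (\Delta x)^3[\frac{|\alpha|}{6}(\Delta x)^2(2q+1)r + \frac{3}{2}|\beta|]^{-1}$. Exact grid values $\tilde u^{(m)}_k=u(m\Delta t,k\Delta x)$, error $e^{(m)}=u^{(m)}-\tilde u^{(m)}$. *)

From Stdlib Require Import Reals Lra Lia ZArith List.
From Coquelicot Require Import Coquelicot.
Open Scope R_scope.

(* Grid functions: v : Z -> R, periodic with period K. *)
Definition grid := Z -> R.

Definition dplus_x (dx : R) (v : grid) : grid :=
  fun k => (v (k + 1)%Z - v k) / dx.
Definition d1_x (dx : R) (v : grid) : grid :=
  fun k => (v (k + 1)%Z - v (k - 1)%Z) / (2 * dx).
Definition d2_x (dx : R) (v : grid) : grid :=
  fun k => (v (k + 1)%Z - 2 * v k + v (k - 1)%Z) / (dx ^ 2).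

Definition gnorm (K : nat) (dx : R) (v : grid) : R :=
  sqrt (sum_f_R0 (fun i => (v (Z.of_nat (S i))) ^ 2 * dx) (K - 1)%nat).

(* ||v||_inf = max_{k=1..K} |v_k| (= max over all k by periodicity) *)
Definition gnorm_inf (K : nat) (v : grid) : R :=
  fold_right Rmax 0 (map (fun i => Rabs (v (Z.of_nat i))) (seq 1 K)).

Definition gnorm_H1 (K : nat) (dx : R) (v : grid) : R :=
  sqrt (gnorm K dx v ^ 2 + gnorm K dx (dplus_x dx v) ^ 2).

Definition scheme_step (alpha beta dx dt : R) (u0 u1 : grid) : Prop :=
  forall k : Z,
    (u1 k - u0 k) / dt =
      - (alpha / 6) * d1_x dx (fun j => (u1 j) ^ 2 + u1 j * u0 j + (u0 j) ^ 2) k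
      + beta * d1_x dx (d2_x dx (fun j => (u1 j + u0 j) / 2)) k.

Definition scheme_eps1 (alpha beta q r dx : R) : R :=
  (q - 1) * dx ^ 3 /
    (Rabs alpha / 6 * dx ^ 2 * (q ^ 2 + q + 1) * r + 3 / 2 * Rabs beta * (q + 1)).
Definition scheme_eps2 (alpha beta q r dx : R) : R :=
  dx ^ 3 / (Rabs alpha / 6 * dx ^ 2 * (2 * q + 1) * r + 3 / 2 * Rabs beta).

Definition smooth2 (u : R -> R -> R) : Prop :=
  exists D : nat -> nat -> R -> R -> R,
    D O O = u /\
    forall (i j : nat) (t x : R),
      is_derive (fun s => D i j s x) t (D (S i) j t x) /\
      is_derive (fun y => D i j t y) x (D i (S j) t x) /\
      continuous (fun p : R * R => D i j (fst p) (snd p)) (t, x).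

(* Let e = U - u on the grid. Taylor expansion shows that the grid values of the exact solution
   satisfy the scheme up to a residual tau with |tau| and |delta+ tau| bounded by
   C (dt^2 + dx^2); for delta+ tau one uses that the forward difference quotient in x of the
   smooth periodic solution is again smooth, with derivatives bounded by those of u one order
   higher. Summation by parts over a period shows that the scheme conserves, up to tau, the
   energy sgn(beta) (beta/2 |delta+ e|^2 + alpha/6 sum (3 u e^2 + e^3)) + Kc |e|^2; once Kc
   dominates the cubic term (which needs the sup-norm bounds r and q r of u and U) this energy
   controls min(1, |beta|/2) |e|_{H^1}^2. The resulting one-step inequality
   E' <= (1 + 4 lam dt) E + C dt (dt^2 + dx^2)^2 with E(0) = 0 is summed by discrete Gronwall. *)

From Stdlib Require Import Reals Lra Lia ZArith List Classical ClassicalEpsilon.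
From Coquelicot Require Import Coquelicot.
Open Scope R_scope.
Set Bullet Behavior "Strict Subproofs".

(** * Taylor estimates *)

Definition derivative_tower (n : nat) (F : nat -> R -> R) : Prop :=
  forall k, (k < n)%nat -> forall s, is_derive (F k) s (F (S k) s).

Lemma derivative_tower_Derive_n n F : derivative_tower n F ->
  forall k, (k <= n)%nat -> forall s, Derive_n (F O) k s = F k s.
Proof.
  intros HF k. induction k as [|k IH]; intros Hk s; [reflexivity|].
  simpl. rewrite (Derive_ext _ (F k)).
  - apply is_derive_unique, HF. lia.
  - intros t. apply IH. lia.
Qed.

Lemma derivative_tower_ex_derive_n n F : derivative_tower n F ->
  forall k, (k <= n)%nat -> forall s, ex_derive_n (F O) k s.
Proof.
  intros HF [|k] Hk s; [exact I|].
  simpl. apply ex_derive_ext with (F k).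
  - intros t. symmetry. apply (derivative_tower_Derive_n n); auto. lia.
  - exists (F (S k) s). apply HF. lia.
Qed.

Lemma taylor_remainder_right p F c h M : derivative_tower (S p) F -> 0 < h ->
  (forall s, c <= s <= c + h -> Rabs (F (S p) s) <= M) ->
  Rabs (F O (c + h) - sum_f_R0 (fun m => h ^ m / INR (fact m) * F m c) p)
    <= M * h ^ (S p) / INR (fact (S p)).
Proof.
  intros HF Hh HM.
  destruct (Taylor_Lagrange (F O) p c (c + h)) as [z [Hz Heq]]; [lra| |].
  { intros t _ k Hk. apply (derivative_tower_ex_derive_n (S p)); auto. }
  replace (c + h - c) with h in Heq by ring.
  rewrite Heq, (derivative_tower_Derive_n (S p) F HF (S p)) by lia.
  rewrite (sum_eq _ (fun m => h ^ m / INR (fact m) * F m c)).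
  2:{ intros i Hi. rewrite (derivative_tower_Derive_n (S p) F HF i) by lia. reflexivity. }
  assert (Hfact : 0 < INR (fact (S p))) by (apply lt_0_INR, lt_O_fact).
  assert (Hpow : 0 < h ^ S p / INR (fact (S p))) by (apply Rdiv_lt_0_compat; [apply pow_lt|]; lra).
  unfold Rminus. rewrite Rplus_comm, <- Rplus_assoc, Rplus_opp_l, Rplus_0_l.
  rewrite Rabs_mult, (Rabs_pos_eq (_ / _)) by lra.
  apply Rle_trans with (h ^ S p / INR (fact (S p)) * M).
  - apply Rmult_le_compat_l; [lra|]. apply HM. lra.
  - right. field. lra.
Qed.

Definition reflect_tower (F : nat -> R -> R) : nat -> R -> R :=
  fun k s => (-1) ^ k * F k (- s).

Lemma is_derive_opp_arg (f : R -> R) s df :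
  is_derive f (- s) df -> is_derive (fun x => f (- x)) s (- df).
Proof.
  intros H.
  assert (Hopp : is_derive (fun x : R => - x) s (-1)) by (auto_derive; [exact I | ring]).
  pose proof (is_derive_comp f (fun x => - x) s df (-1) H Hopp) as Hc.
  replace (- df) with (scal (-1) df) by (unfold scal; simpl; unfold mult; simpl; ring).
  exact Hc.
Qed.

Lemma derivative_tower_reflect n F : derivative_tower n F -> derivative_tower n (reflect_tower F).
Proof.
  intros HF k Hk s. unfold reflect_tower.
  replace ((-1) ^ S k * F (S k) (- s)) with ((-1) ^ k * (- F (S k) (- s))) by (simpl; ring).
  apply is_derive_scal, (is_derive_opp_arg (F k)), HF; auto.
Qed.

Lemma taylor_remainder_left p F c h M : derivative_tower (S p) F -> 0 < h ->
  (forall s, c - h <= s <= c -> Rabs (F (S p) s) <= M) ->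
  Rabs (F O (c - h) - sum_f_R0 (fun m => (- h) ^ m / INR (fact m) * F m c) p)
    <= M * h ^ (S p) / INR (fact (S p)).
Proof.
  intros HF Hh HM.
  pose proof (taylor_remainder_right p (reflect_tower F) (- c) h M
                (derivative_tower_reflect _ _ HF) Hh) as H.
  unfold reflect_tower in H.
  replace (- (- c + h)) with (c - h) in H by ring.
  rewrite (sum_eq _ (fun m => (- h) ^ m / INR (fact m) * F m c)) in H.
  - simpl pow in H at 1. rewrite Rmult_1_l in H. apply H.
    intros s Hs. rewrite Rabs_mult, Rabs_mult, Rabs_m1, pow_1_abs, !Rmult_1_l. apply HM. lra.
  - intros i _. rewrite Ropp_involutive.
    replace (- h) with ((-1) * h) by ring. rewrite Rpow_mult_distr. field.
    apply not_0_INR, fact_neq_0.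
Qed.

Lemma INR_fact_upto_5 : INR (fact 0) = 1 /\ INR (fact 1) = 1 /\ INR (fact 2) = 2 /\
  INR (fact 3) = 6 /\ INR (fact 4) = 24 /\ INR (fact 5) = 120.
Proof. repeat split; simpl; ring. Qed.

Lemma Rabs_div_le x d B : 0 < d -> Rabs x <= B * d -> Rabs (x / d) <= B.
Proof.
  intros Hd H. unfold Rdiv. rewrite Rabs_mult, Rabs_inv, (Rabs_pos_eq d) by lra.
  apply Rmult_le_reg_r with d; auto.
  rewrite Rmult_assoc, Rinv_l by lra. lra.
Qed.

Lemma mean_value_bound (f f' : R -> R) a b M : a <= b ->
  (forall s, a <= s <= b -> is_derive f s (f' s)) ->
  (forall s, a <= s <= b -> Rabs (f' s) <= M) ->
  Rabs (f b - f a) <= M * (b - a).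
Proof.
  intros Hab Hd HM.
  destruct (MVT_gen f a b f') as [c [Hc ->]];
    rewrite Rmin_left, Rmax_right in * by lra.
  - intros s Hs. apply Hd. lra.
  - intros s Hs. apply continuity_pt_filterlim.
    apply (ex_derive_continuous (K := R_AbsRing) (V := R_NormedModule)).
    exists (f' s). apply Hd, Hs.
  - rewrite Rabs_mult, (Rabs_pos_eq (b - a)) by lra.
    apply Rmult_le_compat_r; [lra | apply HM, Hc].
Qed.

Lemma central_average_error F c h M : derivative_tower 2 F -> 0 < h ->
  (forall s, c - h <= s <= c + h -> Rabs (F 2%nat s) <= M) ->
  Rabs ((F O (c + h) + F O (c - h)) / 2 - F O c) <= M * h ^ 2 / 2.
Proof.
  intros HF Hh HM.
  pose proof (taylor_remainder_right 1 F c h M HF Hh ltac:(intros; apply HM; lra)) as H1.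
  pose proof (taylor_remainder_left 1 F c h M HF Hh ltac:(intros; apply HM; lra)) as H2.
  cbn [sum_f_R0] in H1, H2. destruct INR_fact_upto_5 as [f0 [f1 [f2 _]]].
  rewrite f0, f1, f2 in H1, H2.
  apply Rabs_le_between in H1, H2. apply Rabs_le. simpl in H1, H2 |- *. lra.
Qed.

Lemma central_difference_error F c h M : derivative_tower 3 F -> 0 < h ->
  (forall s, c - h <= s <= c + h -> Rabs (F 3%nat s) <= M) ->
  Rabs ((F O (c + h) - F O (c - h)) / (2 * h) - F 1%nat c) <= M * h ^ 2 / 6.
Proof.
  intros HF Hh HM.
  pose proof (taylor_remainder_right 2 F c h M HF Hh ltac:(intros; apply HM; lra)) as H1.
  pose proof (taylor_remainder_left 2 F c h M HF Hh ltac:(intros; apply HM; lra)) as H2.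
  cbn [sum_f_R0] in H1, H2. destruct INR_fact_upto_5 as [f0 [f1 [f2 [f3 _]]]].
  rewrite f0, f1, f2, f3 in H1, H2.
  match type of H1 with Rabs ?x <= _ => set (R1 := x) in H1 end.
  match type of H2 with Rabs ?x <= _ => set (R2 := x) in H2 end.
  replace ((F O (c + h) - F O (c - h)) / (2 * h) - F 1%nat c) with ((R1 - R2) / (2 * h))
    by (unfold R1, R2; simpl; field; lra).
  apply Rabs_div_le; [lra|].
  apply Rabs_le_between in H1, H2. apply Rabs_le. simpl in H1, H2 |- *. nra.
Qed.

Lemma third_difference_error F c h M : derivative_tower 5 F -> 0 < h ->
  (forall s, c - 2 * h <= s <= c + 2 * h -> Rabs (F 5%nat s) <= M) ->
  Rabs ((F O (c + 2 * h) - 2 * F O (c + h) + 2 * F O (c - h) - F O (c - 2 * h)) / (2 * h ^ 3)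
     - F 3%nat c) <= M * h ^ 2 / 3.
Proof.
  intros HF Hh HM.
  assert (HM0 : 0 <= M) by (eapply Rle_trans; [apply Rabs_pos | apply (HM c); lra]).
  pose proof (taylor_remainder_right 4 F c h M HF Hh ltac:(intros; apply HM; lra)) as H1.
  pose proof (taylor_remainder_left 4 F c h M HF Hh ltac:(intros; apply HM; lra)) as H2.
  pose proof (taylor_remainder_right 4 F c (2 * h) M HF ltac:(lra)
                ltac:(intros; apply HM; lra)) as H3.
  pose proof (taylor_remainder_left 4 F c (2 * h) M HF ltac:(lra)
                ltac:(intros; apply HM; lra)) as H4.
  cbn [sum_f_R0] in H1, H2, H3, H4. destruct INR_fact_upto_5 as [f0 [f1 [f2 [f3 [f4 f5]]]]].
  rewrite f0, f1, f2, f3, f4, f5 in H1, H2, H3, H4.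
  match type of H1 with Rabs ?x <= _ => set (R1 := x) in H1 end.
  match type of H2 with Rabs ?x <= _ => set (R2 := x) in H2 end.
  match type of H3 with Rabs ?x <= _ => set (R3 := x) in H3 end.
  match type of H4 with Rabs ?x <= _ => set (R4 := x) in H4 end.
  assert (Hh3 : 0 < h ^ 3) by (apply pow_lt; lra).
  replace ((F O (c + 2 * h) - 2 * F O (c + h) + 2 * F O (c - h) - F O (c - 2 * h)) / (2 * h ^ 3)
           - F 3%nat c)
    with ((R3 - 2 * R1 + 2 * R2 - R4) / (2 * h ^ 3))
    by (unfold R1, R2, R3, R4; simpl; field; lra).
  apply Rabs_div_le; [lra|].
  apply Rabs_le_between in H1, H2, H3, H4. apply Rabs_le.
  replace ((2 * h) ^ 5) with (32 * (h ^ 2 * h ^ 3)) in H3, H4 by ring.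
  replace (h ^ 5) with (h ^ 2 * h ^ 3) in H1, H2 by ring.
  assert (0 <= M * h ^ 2) by (apply Rmult_le_pos; [lra | apply pow_le; lra]).
  simpl pow in H1, H2, H3, H4 |- *. nra.
Qed.

(** * Truncation error of the scheme *)

Notation derivative_array := (nat -> nat -> R -> R -> R) (only parsing).

Definition partial_tower (E : derivative_array) : Prop :=
  forall i j t x, is_derive (fun s => E i j s x) t (E (S i) j t x) /\
                  is_derive (fun y => E i j t y) x (E i (S j) t x).

Definition partials_bounded (E : derivative_array) (I J : nat) (T Mb : R) : Prop :=
  forall i j t x, (i <= I)%nat -> (j <= J)%nat -> 0 <= t <= T -> Rabs (E i j t x) <= Mb.

Definition time_tower (E : derivative_array) (i j : nat) (x : R) : nat -> R -> R :=
  fun k s => E (k + i)%nat j s x.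
Definition space_tower (E : derivative_array) (i j : nat) (t : R) : nat -> R -> R :=
  fun k y => E i (k + j)%nat t y.

Lemma derivative_tower_time E i j x n : partial_tower E -> derivative_tower n (time_tower E i j x).
Proof. intros HE k _ s. apply HE. Qed.

Lemma derivative_tower_space E i j t n :
  partial_tower E -> derivative_tower n (space_tower E i j t).
Proof. intros HE k _ s. apply HE. Qed.

Lemma partials_bounded_weaken E I J I' J' T Mb : (I' <= I)%nat -> (J' <= J)%nat ->
  partials_bounded E I J T Mb -> partials_bounded E I' J' T Mb.
Proof. intros HI HJ HB i j t x Hi Hj Ht. apply HB; auto; lia. Qed.

Section TimeDifferences.
Variables (E : derivative_array) (I J : nat) (T Mb : R).
Hypotheses (HE : partial_tower E) (HB : partials_bounded E I J T Mb).

Lemma time_increment_bound i j t1 t2 y : (i < I)%nat -> (j <= J)%nat ->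
  0 <= t1 -> t1 <= t2 -> t2 <= T -> Rabs (E i j t2 y - E i j t1 y) <= Mb * (t2 - t1).
Proof.
  intros Hi Hj H1 H2 H3.
  apply (mean_value_bound (fun s => E i j s y) (fun s => E (S i) j s y)); auto.
  - intros s _. apply HE.
  - intros s Hs. apply HB; lia || lra.
Qed.

Lemma time_second_difference_bound i j tm ht y : (i + 2 <= I)%nat -> (j <= J)%nat ->
  0 < ht -> 0 <= tm - ht -> tm + ht <= T ->
  Rabs (E i j (tm + ht) y + E i j (tm - ht) y - 2 * E i j tm y) <= Mb * ht ^ 2.
Proof.
  intros Hi Hj H1 H2 H3.
  pose proof (central_average_error (time_tower E i j y) tm ht Mb
                (derivative_tower_time _ _ _ _ _ HE) H1) as H.
  unfold time_tower in H. simpl Nat.add in H.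
  replace (E i j (tm + ht) y + E i j (tm - ht) y - 2 * E i j tm y)
    with (2 * ((E i j (tm + ht) y + E i j (tm - ht) y) / 2 - E i j tm y)) by field.
  rewrite Rabs_mult, Rabs_pos_eq by lra.
  assert (H' := H ltac:(intros s Hs; apply HB; lia || lra)). lra.
Qed.

End TimeDifferences.

Definition third_difference (f : R -> R) (x h : R) : R :=
  (f (x + 2 * h) - 2 * f (x + h) + 2 * f (x - h) - f (x - 2 * h)) / (2 * h ^ 3).

(* One time step of length [2 * ht] centred at [tm]; [h] is the space step. *)
Definition linear_truncation (E : derivative_array) (tm ht h beta x : R) : R :=
  (E O O (tm + ht) x - E O O (tm - ht) x) / (2 * ht) - E 1%nat O tm x
  - beta * ((third_difference (E O O (tm + ht)) x h + third_difference (E O O (tm - ht)) x h) / 2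
            - E O 3%nat tm x).

Lemma linear_truncation_bound E T Mb tm ht h beta x :
  partial_tower E -> partials_bounded E 3 5 T Mb ->
  0 < ht -> 0 < h -> 0 <= tm - ht -> tm + ht <= T ->
  Rabs (linear_truncation E tm ht h beta x)
    <= Mb * ht ^ 2 / 6 + Rabs beta * (Mb * h ^ 2 / 3 + Mb * ht ^ 2 / 2).
Proof.
  intros HE HB Hht Hh Hlo Hhi. unfold linear_truncation, third_difference.
  pose proof (central_difference_error (time_tower E 0 0 x) tm ht Mb
    (derivative_tower_time _ _ _ _ _ HE) Hht
    ltac:(intros s Hs; unfold time_tower; apply HB; lia || lra)) as Ht.
  pose proof (third_difference_error (space_tower E 0 0 (tm + ht)) x h Mb
    (derivative_tower_space _ _ _ _ _ HE) Hh
    ltac:(intros s Hs; unfold space_tower; apply HB; lia || lra)) as Hp.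
  pose proof (third_difference_error (space_tower E 0 0 (tm - ht)) x h Mb
    (derivative_tower_space _ _ _ _ _ HE) Hh
    ltac:(intros s Hs; unfold space_tower; apply HB; lia || lra)) as Hm.
  pose proof (central_average_error (time_tower E 0 3 x) tm ht Mb
    (derivative_tower_time _ _ _ _ _ HE) Hht
    ltac:(intros s Hs; unfold time_tower; apply HB; lia || lra)) as Ha.
  unfold time_tower, space_tower in Ht, Hp, Hm, Ha. simpl Nat.add in Ht, Hp, Hm, Ha.
  match type of Ht with Rabs ?e <= _ => set (et := e) in * end.
  match type of Hp with Rabs (?q - _) <= _ => set (qp := q) in * end.
  match type of Hm with Rabs (?q - _) <= _ => set (qm := q) in * end.
  match type of Ha with Rabs (?q - _) <= _ => set (qa := q) in * end.
  assert (Hbeta : Rabs ((qp + qm) / 2 - E O 3%nat tm x) <= Mb * h ^ 2 / 3 + Mb * ht ^ 2 / 2).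
  { apply Rabs_le_between in Hp, Hm, Ha. apply Rabs_le. unfold qa in Ha. lra. }
  eapply Rle_trans; [apply Rabs_triang|]. rewrite Rabs_Ropp, Rabs_mult.
  apply Rplus_le_compat; [exact Ht|].
  apply Rmult_le_compat_l; [apply Rabs_pos | exact Hbeta].
Qed.

Lemma central_quotient_product_bound (g g' k k' : R -> R) Gb Gb' Kb Kb' x h : 0 < h ->
  (forall y, is_derive g y (g' y)) -> (forall y, is_derive k y (k' y)) ->
  (forall y, Rabs (g y) <= Gb) -> (forall y, Rabs (g' y) <= Gb') ->
  (forall y, Rabs (k y) <= Kb) -> (forall y, Rabs (k' y) <= Kb') ->
  Rabs ((g (x + h) * k (x + h) - g (x - h) * k (x - h)) / (2 * h)) <= Gb' * Kb + Gb * Kb'.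
Proof.
  intros Hh Hg Hk Hgb Hgb' Hkb Hkb'.
  apply Rabs_div_le; [lra|].
  replace (2 * h) with (x + h - (x - h)) by ring.
  apply (mean_value_bound (fun y => g y * k y) (fun y => g' y * k y + g y * k' y)); [lra| |].
  - intros s _. apply (is_derive_mult g k); auto. intros; apply Rmult_comm.
  - intros s _. eapply Rle_trans; [apply Rabs_triang|]. rewrite !Rabs_mult.
    apply Rplus_le_compat; apply Rmult_le_compat; auto using Rabs_pos.
Qed.

Definition time_combination (E : derivative_array) (j : nat) (ta tb tc ca cb cc y : R) : R :=
  ca * E O j ta y + cb * E O j tb y + cc * E O j tc y.

Lemma is_derive_time_combination E j ta tb tc ca cb cc y : partial_tower E ->
  is_derive (time_combination E j ta tb tc ca cb cc) y
            (time_combination E (S j) ta tb tc ca cb cc y).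
Proof.
  intros HE. unfold time_combination.
  apply (is_derive_plus (fun y => _ + _)); [apply (is_derive_plus (fun y => _ * _))|];
    apply is_derive_scal; apply HE.
Qed.

Lemma time_combination_product_quotient E F ta tb tc ca cb cc sa sb sc da db dc Be Bf x h :
  partial_tower E -> partial_tower F -> 0 < h ->
  (forall j y, (j <= 1)%nat -> Rabs (time_combination E j ta tb tc ca cb cc y) <= Be) ->
  (forall j y, (j <= 1)%nat -> Rabs (time_combination F j sa sb sc da db dc y) <= Bf) ->
  Rabs ((time_combination E O ta tb tc ca cb cc (x + h)
           * time_combination F O sa sb sc da db dc (x + h)
         - time_combination E O ta tb tc ca cb cc (x - h)
           * time_combination F O sa sb sc da db dc (x - h)) / (2 * h))
    <= 2 * (Be * Bf).
Proof.
  intros HE HF Hh Hbe Hbf.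
  replace (2 * (Be * Bf)) with (Be * Bf + Be * Bf) by ring.
  apply (central_quotient_product_bound _ (time_combination E 1 ta tb tc ca cb cc) _
           (time_combination F 1 sa sb sc da db dc)); auto; intros y;
    first [apply is_derive_time_combination; auto | apply Hbe; lia | apply Hbf; lia].
Qed.

Section TimeCombinations.
Variables (E : derivative_array) (J : nat) (T Mb tm ht : R).
Hypotheses (HE : partial_tower E) (HB : partials_bounded E 2 J T Mb)
  (Hht : 0 < ht) (Hlo : 0 <= tm - ht) (Hhi : tm + ht <= T).

Lemma time_combination_mid_bound j y : (j <= J)%nat ->
  Rabs (time_combination E j tm tm tm 1 0 0 y) <= Mb.
Proof.
  intros Hj. unfold time_combination.
  replace (1 * E O j tm y + 0 * E O j tm y + 0 * E O j tm y) with (E O j tm y) by ring.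
  apply HB; lia || lra.
Qed.

Lemma time_combination_forward_bound j y : (j <= J)%nat ->
  Rabs (time_combination E j (tm + ht) tm tm 1 (-1) 0 y) <= Mb * ht.
Proof.
  intros Hj. unfold time_combination.
  replace (1 * E O j (tm + ht) y + -1 * E O j tm y + 0 * E O j tm y)
    with (E O j (tm + ht) y - E O j tm y) by ring.
  replace ht with (tm + ht - tm) at 2 by ring.
  apply (time_increment_bound E 2 J T Mb); auto; lia || lra.
Qed.

Lemma time_combination_backward_bound j y : (j <= J)%nat ->
  Rabs (time_combination E j (tm - ht) tm tm 1 (-1) 0 y) <= Mb * ht.
Proof.
  intros Hj. unfold time_combination.
  replace (1 * E O j (tm - ht) y + -1 * E O j tm y + 0 * E O j tm y)
    with (- (E O j tm y - E O j (tm - ht) y)) by ring.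
  rewrite Rabs_Ropp. replace ht with (tm - (tm - ht)) at 2 by ring.
  apply (time_increment_bound E 2 J T Mb); auto; lia || lra.
Qed.

Lemma time_combination_second_bound j y : (j <= J)%nat ->
  Rabs (time_combination E j (tm + ht) (tm - ht) tm 1 1 (-2) y) <= Mb * ht ^ 2.
Proof.
  intros Hj. unfold time_combination.
  replace (1 * E O j (tm + ht) y + 1 * E O j (tm - ht) y + -2 * E O j tm y)
    with (E O j (tm + ht) y + E O j (tm - ht) y - 2 * E O j tm y) by ring.
  apply (time_second_difference_bound E 2 J T Mb); auto; lia.
Qed.

End TimeCombinations.

(* Polarization of the scheme's flux u1^2 + u1 u0 + u0^2; bilinearity is what lets the forward
   difference of the truncation error be expanded below. *)
Definition product_flux (E F : derivative_array) (tm ht y : R) : R :=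
  E O O (tm + ht) y * F O O (tm + ht) y
  + (E O O (tm + ht) y * F O O (tm - ht) y + E O O (tm - ht) y * F O O (tm + ht) y) / 2
  + E O O (tm - ht) y * F O O (tm - ht) y.

Definition nonlinear_truncation (E F : derivative_array) (tm ht h x : R) : R :=
  (product_flux E F tm ht (x + h) - product_flux E F tm ht (x - h)) / (12 * h)
  - (E O O tm x * F O 1%nat tm x + E O 1%nat tm x * F O O tm x) / 2.

Definition product_space_tower (E F : derivative_array) (t : R) (k : nat) (y : R) : R :=
  match k with
  | O => E O O t y * F O O t y
  | 1%nat => E O 1%nat t y * F O O t y + E O O t y * F O 1%nat t y
  | 2%nat => E O 2%nat t y * F O O t y + 2 * (E O 1%nat t y * F O 1%nat t y)
             + E O O t y * F O 2%nat t y
  | _ => E O 3%nat t y * F O O t y + 3 * (E O 2%nat t y * F O 1%nat t y)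
         + 3 * (E O 1%nat t y * F O 2%nat t y) + E O O t y * F O 3%nat t y
  end.

Lemma is_derive_Rplus (f g : R -> R) x df dg d :
  is_derive f x df -> is_derive g x dg -> df + dg = d -> is_derive (fun y => f y + g y) x d.
Proof. intros Hf Hg <-. apply (is_derive_plus f g); auto. Qed.

Lemma derivative_tower_product E F t : partial_tower E -> partial_tower F ->
  derivative_tower 3 (product_space_tower E F t).
Proof.
  intros HE HF k Hk s.
  assert (Hm : forall a b, is_derive (fun y => E O a t y * F O b t y) s
                 (E O (S a) t s * F O b t s + E O a t s * F O (S b) t s)).
  { intros a b.
    apply (is_derive_mult (fun y => E O a t y) (fun y => F O b t y)); try apply HE; try apply HF.
    intros; apply Rmult_comm. }
  assert (Hc : forall c a b, is_derive (fun y => c * (E O a t y * F O b t y)) s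
                 (c * (E O (S a) t s * F O b t s + E O a t s * F O (S b) t s))).
  { intros c a b. apply is_derive_scal, Hm. }
  destruct k as [|[|[|k]]]; [| | |lia]; simpl.
  - apply Hm.
  - eapply is_derive_Rplus; [apply (Hm 1%nat O) | apply (Hm O 1%nat) | ring].
  - eapply is_derive_Rplus; [| apply (Hm O 2%nat) |].
    + eapply is_derive_Rplus; [apply (Hm 2%nat O) | apply (Hc 2 1%nat 1%nat) | reflexivity].
    + ring.
Qed.

Lemma product_central_difference_error E F T Mb t x h :
  partial_tower E -> partial_tower F ->
  partials_bounded E 0 3 T Mb -> partials_bounded F 0 3 T Mb ->
  0 < h -> 0 <= t <= T ->
  Rabs ((E O O t (x + h) * F O O t (x + h) - E O O t (x - h) * F O O t (x - h)) / (2 * h)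
        - (E O 1%nat t x * F O O t x + E O O t x * F O 1%nat t x)) <= 4 / 3 * (Mb * Mb) * h ^ 2.
Proof.
  intros HE HF HEb HFb Hh Ht.
  replace (4 / 3 * (Mb * Mb) * h ^ 2) with (8 * (Mb * Mb) * h ^ 2 / 6) by field.
  apply (central_difference_error (product_space_tower E F t) x h (8 * (Mb * Mb))
           (derivative_tower_product E F t HE HF) Hh).
  intros s _. simpl.
  assert (Hp : forall a b, (a <= 3)%nat -> (b <= 3)%nat -> Rabs (E O a t s * F O b t s) <= Mb * Mb).
  { intros a b Ha Hb. rewrite Rabs_mult.
    apply Rmult_le_compat; try apply Rabs_pos; [apply HEb | apply HFb]; lia || lra. }
  pose proof (Hp 3%nat O ltac:(lia) ltac:(lia)). pose proof (Hp 2%nat 1%nat ltac:(lia) ltac:(lia)).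
  pose proof (Hp 1%nat 2%nat ltac:(lia) ltac:(lia)). pose proof (Hp O 3%nat ltac:(lia) ltac:(lia)).
  eapply Rle_trans; [apply Rabs_triang|].
  eapply Rle_trans; [apply Rplus_le_compat_r, Rabs_triang|].
  eapply Rle_trans; [apply Rplus_le_compat_r, Rplus_le_compat_r, Rabs_triang|].
  rewrite 2!(Rabs_mult 3), (Rabs_pos_eq 3) by lra. lra.
Qed.

Lemma nonlinear_truncation_bound E F T Mb tm ht h x :
  partial_tower E -> partial_tower F ->
  partials_bounded E 2 3 T Mb -> partials_bounded F 2 3 T Mb ->
  0 < ht -> 0 < h -> 0 <= tm - ht -> tm + ht <= T ->
  Rabs (nonlinear_truncation E F tm ht h x) <= Mb * Mb * (h ^ 2 + 2 * ht ^ 2).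
Proof.
  intros HE HF HEb HFb Hht Hh Hlo Hhi.
  pose proof (product_central_difference_error E F T Mb tm x h HE HF
    (partials_bounded_weaken E 2 3 0 3 T Mb ltac:(lia) ltac:(lia) HEb)
    (partials_bounded_weaken F 2 3 0 3 T Mb ltac:(lia) ltac:(lia) HFb) Hh ltac:(lra)) as Q1.
  (* split E(tm +- ht) into E(tm) plus the time increments; the flux is then 3 E F at tm
     plus products each containing a factor O(ht^2) *)
  assert (HE1 := partials_bounded_weaken E 2 3 2 1 T Mb ltac:(lia) ltac:(lia) HEb).
  assert (HF1 := partials_bounded_weaken F 2 3 2 1 T Mb ltac:(lia) ltac:(lia) HFb).
  pose proof (time_combination_product_quotient E F _ _ _ _ _ _ _ _ _ _ _ _ _ _ x h HE HF Hh
    (time_combination_second_bound E 1 T Mb tm ht HE HE1 Hht Hlo Hhi)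
    (time_combination_mid_bound F 1 T Mb tm ht HF1 Hht Hlo Hhi)) as Q2a.
  pose proof (time_combination_product_quotient F E _ _ _ _ _ _ _ _ _ _ _ _ _ _ x h HF HE Hh
    (time_combination_second_bound F 1 T Mb tm ht HF HF1 Hht Hlo Hhi)
    (time_combination_mid_bound E 1 T Mb tm ht HE1 Hht Hlo Hhi)) as Q2b.
  pose proof (time_combination_product_quotient E F _ _ _ _ _ _ _ _ _ _ _ _ _ _ x h HE HF Hh
    (time_combination_forward_bound E 1 T Mb tm ht HE HE1 Hht Hlo Hhi)
    (time_combination_forward_bound F 1 T Mb tm ht HF HF1 Hht Hlo Hhi)) as Q3a.
  pose proof (time_combination_product_quotient E F _ _ _ _ _ _ _ _ _ _ _ _ _ _ x h HE HF Hh
    (time_combination_forward_bound E 1 T Mb tm ht HE HE1 Hht Hlo Hhi)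
    (time_combination_backward_bound F 1 T Mb tm ht HF HF1 Hht Hlo Hhi)) as Q3b.
  pose proof (time_combination_product_quotient E F _ _ _ _ _ _ _ _ _ _ _ _ _ _ x h HE HF Hh
    (time_combination_backward_bound E 1 T Mb tm ht HE HE1 Hht Hlo Hhi)
    (time_combination_forward_bound F 1 T Mb tm ht HF HF1 Hht Hlo Hhi)) as Q3c.
  pose proof (time_combination_product_quotient E F _ _ _ _ _ _ _ _ _ _ _ _ _ _ x h HE HF Hh
    (time_combination_backward_bound E 1 T Mb tm ht HE HE1 Hht Hlo Hhi)
    (time_combination_backward_bound F 1 T Mb tm ht HF HF1 Hht Hlo Hhi)) as Q3d.
  match type of Q1 with Rabs ?q <= _ => set (q1 := q) in Q1 end.
  match type of Q2a with Rabs ?q <= _ => set (q2a := q) in Q2a end.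
  match type of Q2b with Rabs ?q <= _ => set (q2b := q) in Q2b end.
  match type of Q3a with Rabs ?q <= _ => set (q3a := q) in Q3a end.
  match type of Q3b with Rabs ?q <= _ => set (q3b := q) in Q3b end.
  match type of Q3c with Rabs ?q <= _ => set (q3c := q) in Q3c end.
  match type of Q3d with Rabs ?q <= _ => set (q3d := q) in Q3d end.
  replace (nonlinear_truncation E F tm ht h x)
    with (q1 / 2 + (q2a + q2b) / 4 + (q3a + (q3b + q3c) / 2 + q3d) / 6)
    by (unfold q1, q2a, q2b, q3a, q3b, q3c, q3d, nonlinear_truncation, product_flux,
          time_combination; field; lra).
  apply Rabs_le_between in Q1, Q2a, Q2b, Q3a, Q3b, Q3c, Q3d. apply Rabs_le. nra.
Qed.

Definition shift_space (E : derivative_array) (d : R) : derivative_array :=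
  fun i j t y => E i j t (y + d).
Definition forward_quotient_space (E : derivative_array) (d : R) : derivative_array :=
  fun i j t y => (E i j t (y + d) - E i j t y) / d.

Lemma is_derive_shift (f : R -> R) x d df : is_derive f (x + d) df ->
  is_derive (fun y => f (y + d)) x df.
Proof.
  intros H.
  assert (Hs : is_derive (fun y : R => y + d) x 1) by (auto_derive; [exact I | ring]).
  pose proof (is_derive_comp f (fun y => y + d) x df 1 H Hs) as Hc.
  replace df with (scal 1 df) by (unfold scal; simpl; unfold mult; simpl; ring).
  exact Hc.
Qed.

Lemma is_derive_difference_quotient (f g : R -> R) x df dg d :
  is_derive f x df -> is_derive g x dg -> is_derive (fun y => (f y - g y) / d) x ((df - dg) / d).
Proof.
  intros Hf Hg. unfold Rdiv.
  apply (is_derive_ext (fun y => / d * (f y - g y))); [intros; apply Rmult_comm|].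
  rewrite Rmult_comm. apply is_derive_scal, (is_derive_minus f g); auto.
Qed.

Lemma partial_tower_shift E d : partial_tower E -> partial_tower (shift_space E d).
Proof.
  intros HE i j t x. unfold shift_space. split.
  - apply HE.
  - apply (is_derive_shift (fun y => E i j t y)), HE.
Qed.

Lemma partial_tower_forward_quotient E d :
  partial_tower E -> partial_tower (forward_quotient_space E d).
Proof.
  intros HE i j t x. unfold forward_quotient_space. split.
  - apply (is_derive_difference_quotient (fun s => E i j s (x + d)) (fun s => E i j s x)); apply HE.
  - apply (is_derive_difference_quotient (fun y => E i j t (y + d)) (fun y => E i j t y)).
    + apply (is_derive_shift (fun y => E i j t y)), HE.
    + apply HE.
Qed.

Lemma partials_bounded_shift E d I J T Mb :
  partials_bounded E I J T Mb -> partials_bounded (shift_space E d) I J T Mb.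
Proof. intros HB i j t x Hi Hj Ht. apply HB; auto. Qed.

Lemma partials_bounded_forward_quotient E d I J T Mb : partial_tower E -> 0 < d ->
  partials_bounded E I (S J) T Mb -> partials_bounded (forward_quotient_space E d) I J T Mb.
Proof.
  intros HE Hd HB i j t x Hi Hj Ht. unfold forward_quotient_space.
  apply Rabs_div_le; [lra|].
  replace d with (x + d - x) at 2 by ring.
  apply (mean_value_bound (fun y => E i j t y) (fun y => E i (S j) t y)); [lra| |].
  - intros s _. apply HE.
  - intros s _. apply HB; auto; lia.
Qed.

Lemma third_difference_forward_quotient (f : R -> R) x h d : d <> 0 -> h <> 0 ->
  third_difference (fun y => (f (y + d) - f y) / d) x h
  = (third_difference f (x + d) h - third_difference f x h) / d.
Proof.
  intros Hd Hh. unfold third_difference.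
  replace (x + 2 * h + d) with (x + d + 2 * h) by ring.
  replace (x + h + d) with (x + d + h) by ring.
  replace (x - h + d) with (x + d - h) by ring.
  replace (x - 2 * h + d) with (x + d - 2 * h) by ring.
  field. auto.
Qed.

Lemma linear_truncation_forward_quotient E tm ht h beta x d : d <> 0 -> h <> 0 -> ht <> 0 ->
  (linear_truncation E tm ht h beta (x + d) - linear_truncation E tm ht h beta x) / d
  = linear_truncation (forward_quotient_space E d) tm ht h beta x.
Proof.
  intros Hd Hh Hht. unfold linear_truncation, forward_quotient_space.
  rewrite !third_difference_forward_quotient by auto. field. auto.
Qed.

Lemma nonlinear_truncation_forward_quotient E tm ht h x d : d <> 0 -> h <> 0 ->
  (nonlinear_truncation E E tm ht h (x + d) - nonlinear_truncation E E tm ht h x) / d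
  = nonlinear_truncation (forward_quotient_space E d) (shift_space E d) tm ht h x
    + nonlinear_truncation E (forward_quotient_space E d) tm ht h x.
Proof.
  intros Hd Hh.
  unfold nonlinear_truncation, product_flux, forward_quotient_space, shift_space.
  replace (x + d + h) with (x + h + d) by ring.
  replace (x + d - h) with (x - h + d) by ring.
  field. auto.
Qed.

Definition consistency_constant (alpha beta Mb : R) : R :=
  Mb * (1 + Rabs beta) + 2 * Rabs alpha * Mb * Mb.

Lemma truncation_constants_le alpha beta Mb ht h : 0 <= Mb ->
  Mb * ht ^ 2 / 6 + Rabs beta * (Mb * h ^ 2 / 3 + Mb * ht ^ 2 / 2)
  + Rabs alpha * (2 * (Mb * Mb * (h ^ 2 + 2 * ht ^ 2)))
  <= consistency_constant alpha beta Mb * ((2 * ht) ^ 2 + h ^ 2).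
Proof.
  intros HMb. unfold consistency_constant.
  pose proof (Rabs_pos alpha). pose proof (Rabs_pos beta).
  pose proof (pow2_ge_0 ht). pose proof (pow2_ge_0 h).
  assert (0 <= Mb * Mb) by nra.
  assert (0 <= Rabs beta * Mb) by nra. assert (0 <= Rabs alpha * (Mb * Mb)) by nra.
  nra.
Qed.

Section Consistency.
Variables (E : derivative_array) (T Mb alpha beta tm ht h : R).
Hypotheses (HE : partial_tower E) (HMb : 0 <= Mb) (Hht : 0 < ht) (Hh : 0 < h)
  (Hlo : 0 <= tm - ht) (Hhi : tm + ht <= T).

Let Ct := consistency_constant alpha beta Mb.

Lemma truncation_bound x : partials_bounded E 3 5 T Mb ->
  Rabs (linear_truncation E tm ht h beta x + alpha * nonlinear_truncation E E tm ht h x)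
    <= Ct * ((2 * ht) ^ 2 + h ^ 2).
Proof.
  intros HB.
  assert (HB' := partials_bounded_weaken E 3 5 2 3 T Mb ltac:(lia) ltac:(lia) HB).
  pose proof (linear_truncation_bound E T Mb tm ht h beta x HE HB Hht Hh Hlo Hhi) as Hl.
  pose proof (nonlinear_truncation_bound E E T Mb tm ht h x HE HE HB' HB' Hht Hh Hlo Hhi) as Hn.
  eapply Rle_trans; [|apply (truncation_constants_le alpha beta Mb ht h HMb)].
  eapply Rle_trans; [apply Rabs_triang|]. rewrite Rabs_mult.
  pose proof (Rabs_pos alpha). pose proof (Rabs_pos (nonlinear_truncation E E tm ht h x)). nra.
Qed.

(* The forward difference of the truncation error of [E] is a truncation error of
   [forward_quotient_space E h], whose derivatives are bounded by those of [E] one order higher. *)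
Lemma truncation_forward_quotient_bound x : partials_bounded E 3 6 T Mb ->
  Rabs ((linear_truncation E tm ht h beta (x + h) + alpha * nonlinear_truncation E E tm ht h (x + h)
        - (linear_truncation E tm ht h beta x + alpha * nonlinear_truncation E E tm ht h x)) / h)
    <= Ct * ((2 * ht) ^ 2 + h ^ 2).
Proof.
  intros HB.
  set (Q := forward_quotient_space E h). set (S := shift_space E h).
  assert (HQ : partial_tower Q) by apply partial_tower_forward_quotient, HE.
  assert (HS : partial_tower S) by apply partial_tower_shift, HE.
  assert (HQb : partials_bounded Q 3 5 T Mb) by (apply partials_bounded_forward_quotient; auto).
  assert (HSb : partials_bounded S 2 3 T Mb)
    by (apply partials_bounded_shift, (partials_bounded_weaken E 3 6); auto; lia).
  assert (HQb' := partials_bounded_weaken Q 3 5 2 3 T Mb ltac:(lia) ltac:(lia) HQb).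
  assert (HEb := partials_bounded_weaken E 3 6 2 3 T Mb ltac:(lia) ltac:(lia) HB).
  replace (_ / h) with (linear_truncation Q tm ht h beta x
      + alpha * (nonlinear_truncation Q S tm ht h x + nonlinear_truncation E Q tm ht h x)).
  2:{ unfold Q, S.
      rewrite <- linear_truncation_forward_quotient, <- nonlinear_truncation_forward_quotient
        by lra.
      field. lra. }
  pose proof (linear_truncation_bound Q T Mb tm ht h beta x HQ HQb Hht Hh Hlo Hhi) as Hl.
  pose proof (nonlinear_truncation_bound Q S T Mb tm ht h x HQ HS HQb' HSb Hht Hh Hlo Hhi) as Hn1.
  pose proof (nonlinear_truncation_bound E Q T Mb tm ht h x HE HQ HEb HQb' Hht Hh Hlo Hhi) as Hn2.
  eapply Rle_trans; [|apply (truncation_constants_le alpha beta Mb ht h HMb)].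
  eapply Rle_trans; [apply Rabs_triang|]. rewrite Rabs_mult.
  apply Rplus_le_compat; [exact Hl|]. apply Rmult_le_compat_l; [apply Rabs_pos|].
  eapply Rle_trans; [apply Rabs_triang|]. lra.
Qed.

End Consistency.

Definition cubic_flux (u0 u1 : grid) : grid := fun j => u1 j ^ 2 + u1 j * u0 j + u0 j ^ 2.
Definition time_average (u0 u1 : grid) : grid := fun j => (u1 j + u0 j) / 2.

Definition scheme_residual (alpha beta dx dt : R) (u0 u1 : grid) : grid := fun k =>
  (u1 k - u0 k) / dt + alpha / 6 * d1_x dx (cubic_flux u0 u1) k
  - beta * d1_x dx (d2_x dx (time_average u0 u1)) k.

Definition solves_kdv (alpha beta T : R) (D : derivative_array) : Prop :=
  forall t x, 0 <= t <= T ->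
    D 1%nat O t x = - alpha * D O O t x * D O 1%nat t x + beta * D O 3%nat t x.

Definition grid_sample (D : derivative_array) (t dx : R) : grid :=
  fun k => D O O t (IZR k * dx).

Lemma scheme_residual_grid_sample D alpha beta T dx dt t0 k : dx <> 0 -> 0 < dt ->
  0 <= t0 -> t0 + dt <= T -> solves_kdv alpha beta T D ->
  scheme_residual alpha beta dx dt (grid_sample D t0 dx) (grid_sample D (t0 + dt) dx) k
  = linear_truncation D (t0 + dt / 2) (dt / 2) dx beta (IZR k * dx)
    + alpha * nonlinear_truncation D D (t0 + dt / 2) (dt / 2) dx (IZR k * dx).
Proof.
  intros Hdx Hdt Ht0 HT Hkdv.
  unfold scheme_residual, grid_sample, cubic_flux, time_average, d1_x, d2_x,
    linear_truncation, third_difference, nonlinear_truncation, product_flux.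
  replace (t0 + dt / 2 + dt / 2) with (t0 + dt) by field.
  replace (t0 + dt / 2 - dt / 2) with t0 by field.
  rewrite (Hkdv (t0 + dt / 2)) by lra.
  rewrite Z.add_simpl_r, Z.sub_add, !plus_IZR, !minus_IZR.
  replace ((IZR k + 1 + 1) * dx) with (IZR k * dx + 2 * dx) by ring.
  replace ((IZR k + 1) * dx) with (IZR k * dx + dx) by ring.
  replace ((IZR k - 1 - 1) * dx) with (IZR k * dx - 2 * dx) by ring.
  replace ((IZR k - 1) * dx) with (IZR k * dx - dx) by ring.
  field. lra.
Qed.

Lemma grid_sample_residual_bound D T Mb alpha beta dx dt t0 : partial_tower D ->
  partials_bounded D 3 6 T Mb -> 0 <= Mb -> solves_kdv alpha beta T D ->
  0 < dx -> 0 < dt -> 0 <= t0 -> t0 + dt <= T ->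
  forall k,
    let tau := scheme_residual alpha beta dx dt (grid_sample D t0 dx)
                 (grid_sample D (t0 + dt) dx) in
    Rabs (tau k) <= consistency_constant alpha beta Mb * (dt ^ 2 + dx ^ 2) /\
    Rabs (dplus_x dx tau k) <= consistency_constant alpha beta Mb * (dt ^ 2 + dx ^ 2).
Proof.
  intros HD HB HMb Hkdv Hdx Hdt Ht0 HT k tau.
  assert (Htau : forall j, tau j
            = linear_truncation D (t0 + dt / 2) (dt / 2) dx beta (IZR j * dx)
              + alpha * nonlinear_truncation D D (t0 + dt / 2) (dt / 2) dx (IZR j * dx))
    by (intros j; apply (scheme_residual_grid_sample D alpha beta T); auto; lra).
  replace (dt ^ 2) with ((2 * (dt / 2)) ^ 2) by field.
  split.
  - rewrite Htau. apply (truncation_bound D T); auto; try lra.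
    apply (partials_bounded_weaken D 3 6); auto.
  - unfold dplus_x. rewrite !Htau, plus_IZR, Rmult_plus_distr_r, Rmult_1_l.
    apply (truncation_forward_quotient_bound D T); auto; lra.
Qed.

(** * Uniform bounds on the derivatives of the exact solution *)

Lemma fold_right_Rmax_ge {A} (g : A -> R) l a : In a l -> g a <= fold_right Rmax 0 (map g l).
Proof.
  induction l as [|b l IH]; simpl; [tauto|].
  intros [->|H]; [apply Rmax_l | eapply Rle_trans; [apply IH; auto | apply Rmax_r]].
Qed.

Lemma continuous_bounded_on_box (F : R * R -> R) a b c d : (forall p, continuous F p) ->
  exists B, forall t x, a <= t <= b -> c <= x <= d -> Rabs (F (t, x)) <= B.
Proof.
  intros HC.
  assert (Hdelta : forall p : Compactness.Tn 2 R, exists r : posreal,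
     forall s y, Rabs (s - fst p) < r -> Rabs (y - fst (snd p)) < r ->
        Rabs (F (s, y) - F (fst p, fst (snd p))) < 1).
  { intros [t [x []]]. simpl.
    destruct (proj1 (filterlim_locally F (F (t, x))) (HC (t, x)) (mkposreal 1 Rlt_0_1)) as [r Hr].
    exists r. intros s y Hs Hy. apply (Hr (s, y)). split; assumption. }
  destruct (choice _ Hdelta) as [delta Hdelta'].
  (* [compactness_list] only provides the finite subcover under a double negation *)
  apply NNPP. intros Hnot.
  apply (compactness_list 2 (a, (c, Datatypes.tt)) (b, (d, Datatypes.tt)) delta). intros [l Hl].
  apply Hnot.
  set (g := fun p : Compactness.Tn 2 R => Rabs (F (fst p, fst (snd p))) + 1).
  exists (fold_right Rmax 0 (map g l)). intros t x Ht Hx.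
  destruct (Hl (t, (x, Datatypes.tt))) as [[t1 [x1 []]] [Hin [_ [H1 [H2 _]]]]]; [simpl; tauto|].
  pose proof (Hdelta' (t1, (x1, Datatypes.tt)) t x H1 H2) as Hclose.
  pose proof (fold_right_Rmax_ge g l _ Hin) as Hmax.
  change (g (t1, (x1, Datatypes.tt))) with (Rabs (F (t1, x1)) + 1) in Hmax. simpl in Hclose.
  pose proof (Rabs_triang_inv (F (t, x)) (F (t1, x1))). lra.
Qed.

Lemma periodic_IZR_shift (f : R -> R) L : (forall x, f (x + L) = f x) ->
  forall x n, f (x + IZR n * L) = f x.
Proof.
  intros Hf.
  assert (Hnat : forall x m, f (x + INR m * L) = f x).
  { intros x m. induction m as [|m IH]; [simpl; f_equal; ring|].
    rewrite S_INR. replace (x + (INR m + 1) * L) with (x + INR m * L + L) by ring.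
    rewrite Hf. exact IH. }
  intros x n. destruct (Z_le_gt_dec 0 n) as [Hn|Hn].
  - rewrite <- (Z2Nat.id n Hn), <- INR_IZR_INZ. apply Hnat.
  - rewrite <- (Hnat (x + IZR n * L) (Z.to_nat (- n))). f_equal.
    rewrite INR_IZR_INZ, Z2Nat.id by lia. rewrite opp_IZR. ring.
Qed.

Lemma periodic_reduce (f : R -> R) L : 0 < L -> (forall x, f (x + L) = f x) ->
  forall x, exists x0, 0 <= x0 <= L /\ f x = f x0.
Proof.
  intros HL Hf x. destruct (archimed (x / L)) as [H1 H2].
  exists (x + IZR (- (up (x / L) - 1)) * L). split.
  - rewrite opp_IZR, minus_IZR.
    assert (x = (x / L) * L) by (field; lra). split; nra.
  - rewrite periodic_IZR_shift; auto.
Qed.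

Lemma partial_tower_periodic D L : partial_tower D ->
  (forall t x, D O O t (x + L) = D O O t x) -> forall i j t x, D i j t (x + L) = D i j t x.
Proof.
  intros HD HP i. induction i as [|i IHi].
  - intros j. induction j as [|j IHj]; intros t x; [apply HP|].
    assert (H1 := proj2 (HD O j t x)).
    assert (H2 : is_derive (fun y => D O j t y) x (D O (S j) t (x + L))).
    { apply (is_derive_ext (fun y => D O j t (y + L))); [intros; apply IHj|].
      apply (is_derive_shift (fun y => D O j t y)), HD. }
    apply is_derive_unique in H1, H2. congruence.
  - intros j t x.
    assert (H1 := proj1 (HD i j t x)).
    assert (H2 : is_derive (fun s => D i j s x) t (D (S i) j t (x + L))).
    { apply (is_derive_ext (fun s => D i j s (x + L))); [intros; apply IHi | apply HD]. }
    apply is_derive_unique in H1, H2. congruence.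
Qed.

Lemma finite_uniform_bound (P : nat -> R -> Prop) :
  (forall i B B', B <= B' -> P i B -> P i B') -> (forall i, exists B, P i B) ->
  forall n, exists B, 0 <= B /\ forall i, (i <= n)%nat -> P i B.
Proof.
  intros Hmono Hex n. induction n as [|n [B [HB0 HB]]].
  - destruct (Hex O) as [B HB]. exists (Rmax 0 B). split; [apply Rmax_l|].
    intros i Hi. replace i with O by lia. apply Hmono with B; [apply Rmax_r | exact HB].
  - destruct (Hex (S n)) as [B1 HB1]. exists (Rmax B B1).
    split; [eapply Rle_trans; [exact HB0 | apply Rmax_l]|].
    intros i Hi. destruct (Nat.eq_dec i (S n)) as [->|Hne].
    + apply Hmono with B1; [apply Rmax_r | exact HB1].
    + apply Hmono with B; [apply Rmax_l | apply HB; lia].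
Qed.

Lemma periodic_partials_bounded D L T I J : 0 < L -> partial_tower D ->
  (forall t x, D O O t (x + L) = D O O t x) ->
  (forall i j p, continuous (fun p : R * R => D i j (fst p) (snd p)) p) ->
  exists Mb, 0 <= Mb /\ partials_bounded D I J T Mb.
Proof.
  intros HL HD HP HC.
  assert (Hij : forall i j, exists B, forall t x, 0 <= t <= T -> Rabs (D i j t x) <= B).
  { intros i j.
    destruct (continuous_bounded_on_box (fun p : R * R => D i j (fst p) (snd p)) 0 T 0 L (HC i j))
      as [B HB].
    exists B. intros t x Ht.
    destruct (periodic_reduce (fun y => D i j t y) L HL
                (partial_tower_periodic D L HD HP i j t) x) as [x0 [Hx0 ->]].
    apply (HB t x0); auto. }
  destruct (finite_uniform_bound
              (fun i B => forall j t x, (j <= J)%nat -> 0 <= t <= T -> Rabs (D i j t x) <= B))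
    with (n := I) as [B [HB0 HB]].
  - intros i B B' HBB' H j t x Hj Ht. eapply Rle_trans; [apply H; auto | exact HBB'].
  - intros i.
    destruct (finite_uniform_bound (fun j B => forall t x, 0 <= t <= T -> Rabs (D i j t x) <= B))
      with (n := J) as [B [_ HB]].
    + intros j B B' HBB' H t x Ht. eapply Rle_trans; [apply H; auto | exact HBB'].
    + apply Hij.
    + exists B. intros j t x Hj Ht. apply HB; auto.
  - exists B. split; auto. intros i j t x Hi Hj Ht. apply HB; auto.
Qed.

(** * Summation by parts for periodic grid functions *)

Definition periodic (K : nat) (v : grid) : Prop := forall k, v (k + Z.of_nat K)%Z = v k.

(* k = 1, ..., K as in [gnorm]; [K - 1] is truncated, hence the hypotheses [1 <= K] below. *)
Definition period_sum (K : nat) (v : grid) : R := sum_f_R0 (fun i => v (Z.of_nat (S i))) (K - 1).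

Lemma periodic_shift K v m : periodic K v -> periodic K (fun k => v (k + m)%Z).
Proof.
  intros Hv k. replace (k + Z.of_nat K + m)%Z with (k + m + Z.of_nat K)%Z by lia. apply Hv.
Qed.

Lemma periodic_map K (f : R -> R) u : periodic K u -> periodic K (fun k => f (u k)).
Proof. intros Hu k. now rewrite Hu. Qed.

Lemma periodic_map2 K (f : R -> R -> R) u v :
  periodic K u -> periodic K v -> periodic K (fun k => f (u k) (v k)).
Proof. intros Hu Hv k. now rewrite Hu, Hv. Qed.

Lemma periodic_d1 K dx v : periodic K v -> periodic K (d1_x dx v).
Proof.
  intros Hv. apply (periodic_map2 K (fun a b => (a - b) / (2 * dx))); apply periodic_shift, Hv.
Qed.

Lemma periodic_d2 K dx v : periodic K v -> periodic K (d2_x dx v).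
Proof.
  intros Hv k. unfold d2_x.
  replace (k + Z.of_nat K + 1)%Z with (k + 1 + Z.of_nat K)%Z by lia.
  replace (k + Z.of_nat K - 1)%Z with (k - 1 + Z.of_nat K)%Z by lia.
  now rewrite !Hv.
Qed.

Lemma periodic_dplus K dx v : periodic K v -> periodic K (dplus_x dx v).
Proof. intros Hv k. unfold dplus_x. now rewrite Hv, (periodic_shift K v 1 Hv). Qed.

Lemma period_sum_ext K u v : (forall k, u k = v k) -> period_sum K u = period_sum K v.
Proof. intros H. apply sum_eq. intros; apply H. Qed.

Lemma period_sum_plus K u v : period_sum K (fun k => u k + v k) = period_sum K u + period_sum K v.
Proof. apply plus_sum. Qed.

Lemma period_sum_minus K u v : period_sum K (fun k => u k - v k) = period_sum K u - period_sum K v.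
Proof. apply minus_sum. Qed.

Lemma period_sum_scal K c v : period_sum K (fun k => c * v k) = c * period_sum K v.
Proof.
  unfold period_sum. rewrite scal_sum. apply sum_eq. intros; apply Rmult_comm.
Qed.

Lemma period_sum_le K u v : (forall k, u k <= v k) -> period_sum K u <= period_sum K v.
Proof. intros H. apply sum_Rle. intros; apply H. Qed.

Lemma period_sum_sq_nonneg K v : 0 <= period_sum K (fun k => v k ^ 2).
Proof. apply cond_pos_sum. intros; apply pow2_ge_0. Qed.

Lemma period_sum_abs_le K u v :
  (forall k, Rabs (u k) <= v k) -> Rabs (period_sum K u) <= period_sum K v.
Proof.
  intros H. eapply Rle_trans; [apply Rsum_abs|]. apply sum_Rle. intros; apply H.
Qed.

Lemma period_sum_const K c : (1 <= K)%nat -> period_sum K (fun _ => c) = INR K * c.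
Proof.
  intros HK. unfold period_sum. rewrite sum_cte.
  replace (S (K - 1)) with K by lia. ring.
Qed.

Lemma period_sum_telescope K v : (1 <= K)%nat -> periodic K v ->
  period_sum K (fun k => v (k + 1)%Z - v k) = 0.
Proof.
  intros HK Hv. unfold period_sum.
  assert (Hn : forall n, sum_f_R0 (fun i => v (Z.of_nat (S i) + 1)%Z - v (Z.of_nat (S i))) n
                         = v (Z.of_nat (S n) + 1)%Z - v 1%Z).
  { induction n as [|n IH]; [reflexivity|].
    rewrite tech5, IH. replace (Z.of_nat (S (S n))) with (Z.of_nat (S n) + 1)%Z by lia. ring. }
  rewrite Hn. replace (Z.of_nat (S (K - 1)) + 1)%Z with (1 + Z.of_nat K)%Z by lia.
  rewrite Hv. ring.
Qed.

Lemma period_sum_pred K v : (1 <= K)%nat -> periodic K v ->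
  period_sum K (fun k => v (k - 1)%Z) = period_sum K v.
Proof.
  intros HK Hv. transitivity (period_sum K (fun k => v (k + 1 - 1)%Z)).
  - symmetry. apply Rminus_diag_uniq. rewrite <- period_sum_minus.
    apply (period_sum_telescope K (fun k => v (k - 1)%Z)); auto. apply periodic_shift, Hv.
  - apply period_sum_ext. intros k. f_equal. lia.
Qed.

Section SummationByParts.
Variables (K : nat) (dx : R).
Hypotheses (HK : (1 <= K)%nat) (Hdx : dx <> 0).

Lemma period_sum_scaled_telescope v c : periodic K v ->
  period_sum K (fun k => c * (v (k + 1)%Z - v k)) = 0.
Proof. intros Hv. rewrite period_sum_scal, period_sum_telescope by auto. ring. Qed.

Lemma period_sum_d1_mul_self v : periodic K v -> period_sum K (fun k => d1_x dx v k * v k) = 0.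
Proof.
  intros Hv.
  rewrite <- (period_sum_scaled_telescope (fun k => v k * v (k - 1)%Z) (/ (2 * dx))).
  - apply period_sum_ext. intros k. unfold d1_x. rewrite Z.add_simpl_r. field. auto.
  - apply (periodic_map2 K Rmult); [|apply periodic_shift]; exact Hv.
Qed.

Lemma period_sum_d1_mul a b : periodic K a -> periodic K b ->
  period_sum K (fun k => d1_x dx a k * b k) = - period_sum K (fun k => a k * d1_x dx b k).
Proof.
  intros Ha Hb. apply Rplus_opp_r_uniq. rewrite <- period_sum_plus.
  rewrite (period_sum_ext K _ (fun k => / (2 * dx)
    * ((a (k + 1)%Z * b (k + 1 - 1)%Z - a k * b (k - 1)%Z)
       + (a (k + 1 - 1)%Z * b (k + 1)%Z - a (k - 1)%Z * b k)))).
  2:{ intros k. unfold d1_x. rewrite !Z.add_simpl_r. field. auto. }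
  rewrite period_sum_scal, period_sum_plus.
  rewrite (period_sum_telescope K (fun k => a k * b (k - 1)%Z)),
          (period_sum_telescope K (fun k => a (k - 1)%Z * b k)); auto; [ring| |];
    apply (periodic_map2 K Rmult); try apply periodic_shift; assumption.
Qed.

Lemma period_sum_mul_d2 p q : periodic K p -> periodic K q ->
  period_sum K (fun k => p k * d2_x dx q k)
  = - period_sum K (fun k => dplus_x dx p k * dplus_x dx q k).
Proof.
  intros Hp Hq. apply Rplus_opp_r_uniq. rewrite <- period_sum_plus.
  rewrite (period_sum_ext K _ (fun k => / (dx ^ 2) * ((p (k + 1)%Z * q (k + 1)%Z - p k * q k)
       - (p (k + 1)%Z * q (k + 1 - 1)%Z - p k * q (k - 1)%Z)))).
  2:{ intros k. unfold d2_x, dplus_x. rewrite !Z.add_simpl_r. field. auto. }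
  rewrite period_sum_scal, period_sum_minus.
  rewrite (period_sum_telescope K (fun k => p k * q k)),
          (period_sum_telescope K (fun k => p k * q (k - 1)%Z)); auto; [ring| |];
    apply (periodic_map2 K Rmult); try apply periodic_shift; assumption.
Qed.

Lemma period_sum_d1_mul_d2 w :
  periodic K w -> period_sum K (fun k => d1_x dx w k * d2_x dx w k) = 0.
Proof.
  intros Hw.
  rewrite <- (period_sum_scaled_telescope (fun k => (w k - w (k - 1)%Z) ^ 2) (/ (2 * dx ^ 3))).
  - apply period_sum_ext. intros k. unfold d1_x, d2_x. rewrite Z.add_simpl_r. field. auto.
  - apply (periodic_map2 K (fun a b => (a - b) ^ 2)); [|apply periodic_shift]; exact Hw.
Qed.

End SummationByParts.

(** * Discrete energy estimate for the error *)

Lemma sign_mul_self x : sign x * x = Rabs x.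
Proof.
  destruct (Rtotal_order x 0) as [H|[->|H]].
  - rewrite sign_eq_m1, Rabs_left by lra. ring.
  - rewrite sign_0, Rabs_R0. ring.
  - rewrite sign_eq_1, Rabs_pos_eq by lra. ring.
Qed.

Lemma Rabs_sign_le x : Rabs (sign x) <= 1.
Proof.
  destruct (Rtotal_order x 0) as [H|[->|H]].
  - rewrite sign_eq_m1, Rabs_m1 by lra. lra.
  - rewrite sign_0, Rabs_R0. lra.
  - rewrite sign_eq_1, Rabs_R1 by lra. lra.
Qed.

Lemma Rabs_sign_mul_le x c : Rabs (sign x * c) <= Rabs c.
Proof.
  rewrite Rabs_mult. pose proof (Rabs_sign_le x). pose proof (Rabs_pos c).
  rewrite <- (Rmult_1_l (Rabs c)) at 2. apply Rmult_le_compat_r; lra.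
Qed.

Lemma Rabs_div_pos x c : 0 < c -> Rabs (x / c) = Rabs x / c.
Proof.
  intros Hc. unfold Rdiv. rewrite Rabs_mult, Rabs_inv, (Rabs_pos_eq c) by lra. reflexivity.
Qed.

Lemma Rmult_le_of_Rabs_le c c' S B : Rabs c <= c' -> Rabs S <= B -> c * S <= c' * B.
Proof.
  intros Hc HS. eapply Rle_trans; [apply Rle_abs|]. rewrite Rabs_mult.
  apply Rmult_le_compat; auto using Rabs_pos.
Qed.

Lemma Rabs_mul_cubic_form_le c m x y : Rabs c <= m ->
  Rabs (c * (x ^ 2 + x * y + y ^ 2)) <= m * (3 / 2) * (x ^ 2 + y ^ 2).
Proof.
  intros Hc.
  pose proof (pow2_ge_0 (x + y)). pose proof (pow2_ge_0 (x - y)).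
  assert (Hq : 0 <= x ^ 2 + x * y + y ^ 2 <= 3 / 2 * (x ^ 2 + y ^ 2)) by (split; nra).
  rewrite Rabs_mult, (Rabs_pos_eq (_ + _)) by lra.
  pose proof (Rabs_pos c). nra.
Qed.

Lemma Rabs_mul_le_young t g c x y : 0 <= c -> Rabs g <= c * (Rabs x + Rabs y) ->
  Rabs (t * g) <= c * (t ^ 2 + (x ^ 2 + y ^ 2) / 2).
Proof.
  intros Hc Hg. rewrite Rabs_mult.
  rewrite <- (pow2_abs t), <- (pow2_abs x), <- (pow2_abs y).
  pose proof (Rabs_pos t). pose proof (Rabs_pos x). pose proof (Rabs_pos y).
  pose proof (pow2_ge_0 (Rabs t - Rabs x)). pose proof (pow2_ge_0 (Rabs t - Rabs y)).
  assert (Rabs t * (Rabs x + Rabs y) <= Rabs t ^ 2 + (Rabs x ^ 2 + Rabs y ^ 2) / 2) by nra.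
  apply Rle_trans with (Rabs t * (c * (Rabs x + Rabs y))); [apply Rmult_le_compat_l; auto|].
  nra.
Qed.

Lemma Rabs_mul_average_le p q1 q2 :
  Rabs (p * ((q1 + q2) / 2)) <= p ^ 2 / 2 + (q1 ^ 2 + q2 ^ 2) / 4.
Proof.
  pose proof (pow2_ge_0 (p - (q1 + q2) / 2)). pose proof (pow2_ge_0 (p + (q1 + q2) / 2)).
  pose proof (pow2_ge_0 (q1 - q2)). apply Rabs_le. split; nra.
Qed.

Lemma Rabs_mul_average_le_young g c x y p1 p2 : 0 <= c -> Rabs g <= c * (Rabs x + Rabs y) ->
  Rabs (g * ((p1 + p2) / 2)) <= c / 2 * (x ^ 2 + y ^ 2 + p1 ^ 2 + p2 ^ 2).
Proof.
  intros Hc Hg. rewrite Rabs_mult.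
  assert (Hp : Rabs ((p1 + p2) / 2) <= (Rabs p1 + Rabs p2) / 2).
  { unfold Rdiv. rewrite Rabs_mult, (Rabs_pos_eq (/ 2)) by lra.
    apply Rmult_le_compat_r; [lra | apply Rabs_triang]. }
  rewrite <- (pow2_abs x), <- (pow2_abs y), <- (pow2_abs p1), <- (pow2_abs p2).
  pose proof (Rabs_pos p1). pose proof (Rabs_pos p2).
  pose proof (Rabs_pos x). pose proof (Rabs_pos y).
  pose proof (pow2_ge_0 (Rabs x - Rabs p1)). pose proof (pow2_ge_0 (Rabs x - Rabs p2)).
  pose proof (pow2_ge_0 (Rabs y - Rabs p1)). pose proof (pow2_ge_0 (Rabs y - Rabs p2)).
  assert ((Rabs x + Rabs y) * (Rabs p1 + Rabs p2)
          <= Rabs x ^ 2 + Rabs y ^ 2 + Rabs p1 ^ 2 + Rabs p2 ^ 2) by nra.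
  apply Rle_trans with (c * (Rabs x + Rabs y) * ((Rabs p1 + Rabs p2) / 2));
    [apply Rmult_le_compat; auto using Rabs_pos | nra].
Qed.

(* [(c + z)^3 - c^3 - 3 c^2 z] *)
Definition cubic_remainder (c z : R) : R := 3 * c * z ^ 2 + z ^ 3.

(* The factor [sign beta] makes the dispersive part [|beta| / 2 * |delta+ e|^2] positive. *)
Definition error_energy (K : nat) (dx alpha beta Kc : R) (e w : grid) : R :=
  sign beta * (beta / 2) * period_sum K (fun k => dplus_x dx e k ^ 2)
  + sign beta * (alpha / 6) * period_sum K (fun k => cubic_remainder (w k) (e k))
  + Kc * period_sum K (fun k => e k ^ 2).

Lemma error_energy_coercive K dx alpha beta Kc (e w : grid) r rho :
  (forall k, Rabs (w k) <= r) -> (forall k, Rabs (e k) <= rho) ->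
  Rabs alpha / 6 * (3 * r + rho) + 1 <= Kc ->
  Rabs beta / 2 * period_sum K (fun k => dplus_x dx e k ^ 2) + period_sum K (fun k => e k ^ 2)
    <= error_energy K dx alpha beta Kc e w.
Proof.
  intros Hw He HKc. unfold error_energy.
  assert (Hcubic : Rabs (period_sum K (fun k => cubic_remainder (w k) (e k)))
                   <= (3 * r + rho) * period_sum K (fun k => e k ^ 2)).
  { rewrite <- period_sum_scal. apply period_sum_abs_le. intros k. unfold cubic_remainder.
    replace (3 * w k * e k ^ 2 + e k ^ 3) with (e k ^ 2 * (3 * w k + e k)) by ring.
    rewrite Rabs_mult, (Rabs_pos_eq (e k ^ 2)) by apply pow2_ge_0.
    rewrite Rmult_comm. apply Rmult_le_compat_r; [apply pow2_ge_0|].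
    eapply Rle_trans; [apply Rabs_triang|]. rewrite Rabs_mult, (Rabs_pos_eq 3) by lra.
    pose proof (Hw k). pose proof (He k). lra. }
  set (A := period_sum K (fun k => e k ^ 2)) in *.
  assert (HA : 0 <= A) by (apply period_sum_sq_nonneg).
  assert (Ha : Rabs (alpha / 6) = Rabs alpha / 6) by (apply Rabs_div_pos; lra).
  pose proof (Rmult_le_of_Rabs_le (- (sign beta * (alpha / 6))) (Rabs alpha / 6) _ _
    ltac:(rewrite Rabs_Ropp, <- Ha; apply Rabs_sign_mul_le) Hcubic).
  assert ((Rabs alpha / 6 * (3 * r + rho) + 1) * A <= Kc * A) by (apply Rmult_le_compat_r; auto).
  replace (sign beta * (beta / 2)) with (Rabs beta / 2) by (rewrite <- sign_mul_self; field).
  lra.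
Qed.

Definition flux_constant (r R0 : R) : R := 2 * R0 + 2 * r.

Definition energy_growth (alpha beta r R0 M1 Kc : R) : R :=
  Rabs alpha * M1 / 4 + Rabs alpha * flux_constant r R0 / 12
  + Kc * Rabs alpha * flux_constant r R0 / 3 + Kc / 2 + Rabs beta / 4.

Definition energy_source (alpha beta r R0 Kc : R) : R :=
  Rabs alpha * flux_constant r R0 / 6 + Kc + Rabs beta / 2.

Section EnergyStep.
Variables (K : nat) (dx dt alpha beta r R0 M1 Kc : R) (u0 u1 w0 w1 : grid).
Hypotheses (HK : (1 <= K)%nat) (Hdx : 0 < dx) (Hdt : 0 < dt) (HKc : 0 <= Kc)
  (Hpu0 : periodic K u0) (Hpu1 : periodic K u1) (Hpw0 : periodic K w0) (Hpw1 : periodic K w1)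
  (Hstep : scheme_step alpha beta dx dt u0 u1)
  (Hu0 : forall k, Rabs (u0 k) <= R0) (Hu1 : forall k, Rabs (u1 k) <= R0)
  (Hw0 : forall k, Rabs (w0 k) <= r) (Hw1 : forall k, Rabs (w1 k) <= r)
  (Hw01 : forall k, Rabs (w1 k - w0 k) <= dt * M1).

Let e0 := fun k => u0 k - w0 k.
Let e1 := fun k => u1 k - w1 k.
Let tau := scheme_residual alpha beta dx dt w0 w1.
Let m := time_average e0 e1.
Let G := fun k => cubic_flux u0 u1 k - cubic_flux w0 w1 k.
Let v := fun k => alpha / 6 * G k - beta * d2_x dx m k.
Let cG := flux_constant r R0.

Lemma periodic_e0 : periodic K e0. Proof. apply (periodic_map2 K Rminus); auto. Qed.
Lemma periodic_e1 : periodic K e1. Proof. apply (periodic_map2 K Rminus); auto. Qed.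
Lemma periodic_m : periodic K m.
Proof.
  apply (periodic_map2 K (fun a b => (b + a) / 2)); [apply periodic_e0 | apply periodic_e1].
Qed.
Lemma periodic_v : periodic K v.
Proof.
  apply (periodic_map2 K (fun a b => alpha / 6 * a - beta * b)); [|apply periodic_d2, periodic_m].
  apply (periodic_map2 K Rminus); apply (periodic_map2 K (fun a b => b ^ 2 + b * a + a ^ 2)); auto.
Qed.
Lemma periodic_tau : periodic K tau.
Proof.
  intros k. unfold tau, scheme_residual.
  rewrite (periodic_d1 K dx (cubic_flux w0 w1)), (periodic_d1 K dx (d2_x dx (time_average w0 w1))),
    Hpw0, Hpw1; auto.
  - apply periodic_d2, (periodic_map2 K (fun a b => (b + a) / 2)); auto.
  - apply (periodic_map2 K (fun a b => b ^ 2 + b * a + a ^ 2)); auto.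
Qed.

Lemma error_equation k : e1 k - e0 k = dt * (- d1_x dx v k - tau k).
Proof.
  pose proof (Hstep k) as H.
  replace (e1 k - e0 k) with ((u1 k - u0 k) - (w1 k - w0 k)) by (unfold e0, e1; ring).
  replace (u1 k - u0 k) with (dt * ((u1 k - u0 k) / dt)) by (field; lra). rewrite H.
  unfold v, tau, scheme_residual, G, m, cubic_flux, time_average, e0, e1, d1_x, d2_x. field. lra.
Qed.

Let A0 := period_sum K (fun k => e0 k ^ 2).
Let A1 := period_sum K (fun k => e1 k ^ 2).
Let B0 := period_sum K (fun k => dplus_x dx e0 k ^ 2).
Let B1 := period_sum K (fun k => dplus_x dx e1 k ^ 2).
Let T1 := period_sum K (fun k => tau k ^ 2).
Let T2 := period_sum K (fun k => dplus_x dx tau k ^ 2).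
Let Phi0 := period_sum K (fun k => cubic_remainder (w0 k) (e0 k)).
Let Phi1 := period_sum K (fun k => cubic_remainder (w1 k) (e1 k)).
Let cubic_drift := period_sum K (fun k => (w1 k - w0 k) * (e1 k ^ 2 + e1 k * e0 k + e0 k ^ 2)).
Let residual_flux := period_sum K (fun k => tau k * G k).
Let residual_dispersion := period_sum K (fun k => dplus_x dx tau k * dplus_x dx m k).
Let flux_gradient := period_sum K (fun k => G k * d1_x dx m k).
Let residual_average := period_sum K (fun k => tau k * m k).

Lemma energy_identity_H1 :
  alpha / 6 * (Phi1 - Phi0 - cubic_drift) + beta * ((B1 - B0) / 2)
  = - dt * (alpha / 6 * residual_flux + beta * residual_dispersion).
Proof.
  pose proof periodic_e0 as He0. pose proof periodic_e1 as He1. pose proof periodic_m as Hm.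
  pose proof periodic_v as Hv. pose proof periodic_tau as Htau.
  assert (Hde : periodic K (fun k => e1 k - e0 k)) by (apply (periodic_map2 K Rminus); auto).
  assert (H1 : period_sum K (fun k => (e1 k - e0 k) * v k)
               = - dt * period_sum K (fun k => tau k * v k)).
  { rewrite (period_sum_ext K _ (fun k => (- dt) * (d1_x dx v k * v k) + (- dt) * (tau k * v k))).
    2:{ intros k. rewrite error_equation. ring. }
    rewrite period_sum_plus, !period_sum_scal, period_sum_d1_mul_self by (auto; lra). ring. }
  assert (H2 : period_sum K (fun k => (e1 k - e0 k) * v k)
               = alpha / 6 * period_sum K (fun k => (e1 k - e0 k) * G k)
                 - beta * period_sum K (fun k => (e1 k - e0 k) * d2_x dx m k)).
  { rewrite <- !period_sum_scal, <- period_sum_minus.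
    apply period_sum_ext. intros k. unfold v. ring. }
  assert (H3 : period_sum K (fun k => (e1 k - e0 k) * d2_x dx m k) = - ((B1 - B0) / 2)).
  { rewrite period_sum_mul_d2 by (auto; lra). f_equal. unfold B1, B0. rewrite <- period_sum_minus.
    rewrite (period_sum_ext K (fun k => dplus_x dx e1 k ^ 2 - dplus_x dx e0 k ^ 2)
               (fun k => 2 * (dplus_x dx (fun j => e1 j - e0 j) k * dplus_x dx m k))).
    - rewrite period_sum_scal. field.
    - intros k. unfold dplus_x, m, time_average. field. lra. }
  assert (H4 : period_sum K (fun k => (e1 k - e0 k) * G k) = Phi1 - Phi0 - cubic_drift).
  { unfold Phi1, Phi0, cubic_drift. rewrite <- !period_sum_minus. apply period_sum_ext. intros k.
    unfold G, cubic_flux, cubic_remainder, e0, e1. ring. }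
  assert (H5 : period_sum K (fun k => tau k * v k)
               = alpha / 6 * residual_flux + beta * residual_dispersion).
  { unfold residual_flux, residual_dispersion.
    rewrite (period_sum_ext K _
               (fun k => alpha / 6 * (tau k * G k) + (- beta) * (tau k * d2_x dx m k)))
      by (intros k; unfold v; ring).
    rewrite period_sum_plus, !period_sum_scal, period_sum_mul_d2 by (auto; lra). ring. }
  rewrite <- H4, <- H5. rewrite H3 in H2. lra.
Qed.

Lemma energy_identity_L2 : (A1 - A0) / 2 = dt * (alpha / 6 * flux_gradient) - dt * residual_average.
Proof.
  pose proof periodic_m as Hm. pose proof periodic_v as Hv.
  assert (H1 : period_sum K (fun k => (e1 k - e0 k) * m k)
               = - dt * period_sum K (fun k => d1_x dx v k * m k) - dt * residual_average).
  { unfold residual_average.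
    rewrite (period_sum_ext K _ (fun k => (- dt) * (d1_x dx v k * m k) + (- dt) * (tau k * m k)))
      by (intros k; rewrite error_equation; ring).
    rewrite period_sum_plus, !period_sum_scal. ring. }
  assert (H2 : period_sum K (fun k => d1_x dx v k * m k) = - (alpha / 6 * flux_gradient)).
  { rewrite period_sum_d1_mul by (auto; lra). f_equal. unfold flux_gradient.
    rewrite (period_sum_ext K _ (fun k => alpha / 6 * (G k * d1_x dx m k)
                                          + (- beta) * (d1_x dx m k * d2_x dx m k)))
      by (intros k; unfold v; ring).
    rewrite period_sum_plus, !period_sum_scal, period_sum_d1_mul_d2 by (auto; lra). ring. }
  assert (H3 : period_sum K (fun k => (e1 k - e0 k) * m k) = (A1 - A0) / 2).
  { unfold A1, A0. rewrite <- period_sum_minus.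
    rewrite (period_sum_ext K (fun k => e1 k ^ 2 - e0 k ^ 2) (fun k => 2 * ((e1 k - e0 k) * m k))).
    - rewrite period_sum_scal. field.
    - intros k. unfold m, time_average. field. }
  rewrite <- H3, H1, H2. ring.
Qed.

Lemma flux_difference_bound k : Rabs (G k) <= cG * (Rabs (e1 k) + Rabs (e0 k)).
Proof.
  replace (G k) with ((u1 k + w1 k + w0 k) * e1 k + (u0 k + w0 k + u1 k) * e0 k)
    by (unfold G, cubic_flux, e0, e1; ring).
  assert (Hc1 : Rabs (u1 k + w1 k + w0 k) <= cG).
  { unfold cG, flux_constant. pose proof (Hu1 k). pose proof (Hw1 k). pose proof (Hw0 k).
    pose proof (Rabs_triang (u1 k + w1 k) (w0 k)). pose proof (Rabs_triang (u1 k) (w1 k)).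
    pose proof (Rabs_pos (u0 k)). pose proof (Hu0 k). lra. }
  assert (Hc0 : Rabs (u0 k + w0 k + u1 k) <= cG).
  { unfold cG, flux_constant. pose proof (Hu1 k). pose proof (Hu0 k). pose proof (Hw0 k).
    pose proof (Rabs_triang (u0 k + w0 k) (u1 k)). pose proof (Rabs_triang (u0 k) (w0 k)).
    pose proof (Rabs_pos (w1 k)). pose proof (Hw1 k). lra. }
  eapply Rle_trans; [apply Rabs_triang|]. rewrite !Rabs_mult.
  pose proof (Rabs_pos (e1 k)). pose proof (Rabs_pos (e0 k)).
  pose proof (Rabs_pos (u1 k + w1 k + w0 k)). pose proof (Rabs_pos (u0 k + w0 k + u1 k)). nra.
Qed.

Lemma flux_constant_nonneg : 0 <= cG.
Proof.
  unfold cG, flux_constant. pose proof (Hu0 0%Z). pose proof (Hw0 0%Z).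
  pose proof (Rabs_pos (u0 0%Z)). pose proof (Rabs_pos (w0 0%Z)). lra.
Qed.

Lemma cubic_drift_bound : Rabs cubic_drift <= dt * M1 * (3 / 2) * (A1 + A0).
Proof.
  unfold cubic_drift, A1, A0. rewrite <- period_sum_plus, <- period_sum_scal.
  apply period_sum_abs_le. intros k. apply Rabs_mul_cubic_form_le, Hw01.
Qed.

Lemma residual_flux_bound : Rabs residual_flux <= cG * (T1 + (A1 + A0) / 2).
Proof.
  unfold residual_flux, T1, A1, A0.
  replace (cG * _) with (period_sum K (fun k => cG * (tau k ^ 2 + (e1 k ^ 2 + e0 k ^ 2) / 2))).
  - apply period_sum_abs_le. intros k.
    apply Rabs_mul_le_young; [apply flux_constant_nonneg | apply flux_difference_bound].
  - rewrite period_sum_scal, (period_sum_ext K _ (fun k => tau k ^ 2 + / 2 * (e1 k ^ 2 + e0 k ^ 2)))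
      by (intros; field).
    rewrite period_sum_plus, period_sum_scal, period_sum_plus. field.
Qed.

Lemma dplus_time_average k : dplus_x dx m k = (dplus_x dx e0 k + dplus_x dx e1 k) / 2.
Proof. unfold dplus_x, m, time_average. field. lra. Qed.

Lemma residual_dispersion_bound : Rabs residual_dispersion <= T2 / 2 + (B0 + B1) / 4.
Proof.
  unfold residual_dispersion, T2, B0, B1.
  replace (_ / 2 + _ / 4)
    with (period_sum K (fun k => / 2 * dplus_x dx tau k ^ 2
                                 + / 4 * (dplus_x dx e0 k ^ 2 + dplus_x dx e1 k ^ 2)))
    by (rewrite period_sum_plus, !period_sum_scal, period_sum_plus; field).
  apply period_sum_abs_le. intros k. rewrite dplus_time_average.
  eapply Rle_trans; [apply Rabs_mul_average_le | right; field].
Qed.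

Lemma residual_average_bound : Rabs residual_average <= T1 / 2 + (A0 + A1) / 4.
Proof.
  unfold residual_average, T1, A0, A1.
  replace (_ / 2 + _ / 4)
    with (period_sum K (fun k => / 2 * tau k ^ 2 + / 4 * (e0 k ^ 2 + e1 k ^ 2)))
    by (rewrite period_sum_plus, !period_sum_scal, period_sum_plus; field).
  apply period_sum_abs_le. intros k. unfold m, time_average.
  eapply Rle_trans; [apply Rabs_mul_average_le | right; field].
Qed.

Lemma flux_gradient_bound : Rabs flux_gradient <= cG / 2 * (A1 + A0) + cG / 2 * (B0 + B1).
Proof.
  pose proof flux_constant_nonneg as HcG.
  set (p := dplus_x dx m).
  assert (Hp : periodic K (fun k => p k ^ 2))
    by apply (periodic_map K (fun a => a ^ 2)), periodic_dplus, periodic_m.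
  assert (HP : period_sum K (fun k => p k ^ 2) <= (B0 + B1) / 2).
  { unfold B0, B1. rewrite <- period_sum_plus.
    replace (_ / 2) with (period_sum K (fun k => / 2 * (dplus_x dx e0 k ^ 2 + dplus_x dx e1 k ^ 2)))
      by (rewrite period_sum_scal; field).
    apply period_sum_le. intros k. unfold p. rewrite dplus_time_average.
    pose proof (pow2_ge_0 (dplus_x dx e0 k - dplus_x dx e1 k)). nra. }
  assert (Hd1 : forall k, d1_x dx m k = (p k + p (k - 1)%Z) / 2).
  { intros k. unfold p, d1_x, dplus_x. rewrite Z.sub_add. field. lra. }
  assert (HS4 : Rabs flux_gradient
                <= cG / 2 * period_sum K (fun k => (e1 k ^ 2 + e0 k ^ 2)
                                                   + (p k ^ 2 + p (k - 1)%Z ^ 2))).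
  { unfold flux_gradient. rewrite <- period_sum_scal.
    apply period_sum_abs_le. intros k. rewrite Hd1.
    eapply Rle_trans; [apply Rabs_mul_average_le_young; [exact HcG | apply flux_difference_bound]|].
    right. ring. }
  rewrite !period_sum_plus, (period_sum_pred K (fun j => p j ^ 2) HK Hp) in HS4.
  fold A1 A0 in HS4.
  assert (cG / 2 * (2 * period_sum K (fun k => p k ^ 2)) <= cG / 2 * (B0 + B1))
    by (apply Rmult_le_compat_l; lra).
  lra.
Qed.

Lemma error_energy_difference :
  error_energy K dx alpha beta Kc e1 w1 - error_energy K dx alpha beta Kc e0 w0
  = (sign beta * (alpha / 6)) * cubic_drift
    + (- (sign beta * dt * (alpha / 6))) * residual_flux
    + (- (sign beta * dt * beta)) * residual_dispersion
    + (2 * Kc * dt * (alpha / 6)) * flux_gradient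
    + (- (2 * Kc * dt)) * residual_average.
Proof.
  transitivity (sign beta * (alpha / 6 * (Phi1 - Phi0 - cubic_drift) + beta * ((B1 - B0) / 2))
                + sign beta * (alpha / 6) * cubic_drift + 2 * Kc * ((A1 - A0) / 2)).
  - unfold error_energy. fold B1 B0 Phi1 Phi0 A1 A0. field.
  - rewrite energy_identity_H1, energy_identity_L2. field.
Qed.

Lemma error_energy_step :
  error_energy K dx alpha beta Kc e1 w1 - error_energy K dx alpha beta Kc e0 w0
  <= dt * (energy_growth alpha beta r R0 M1 Kc * (A0 + A1 + B0 + B1)
           + energy_source alpha beta r R0 Kc * (T1 + T2)).
Proof.
  pose proof flux_constant_nonneg as HcG.
  assert (Ha : Rabs (alpha / 6) = Rabs alpha / 6) by (apply Rabs_div_pos; lra).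
  assert (Hdt' : Rabs dt = dt) by (apply Rabs_pos_eq; lra).
  assert (HKc' : Rabs Kc = Kc) by (apply Rabs_pos_eq; lra).
  assert (H2 : Rabs 2 = 2) by (apply Rabs_pos_eq; lra).
  pose proof (Rmult_le_of_Rabs_le (sign beta * (alpha / 6)) (Rabs alpha / 6) _ _
    ltac:(rewrite <- Ha; apply Rabs_sign_mul_le) cubic_drift_bound).
  pose proof (Rmult_le_of_Rabs_le (- (sign beta * dt * (alpha / 6))) (dt * (Rabs alpha / 6)) _ _
    ltac:(rewrite Rabs_Ropp, Rmult_assoc; eapply Rle_trans;
          [apply Rabs_sign_mul_le | rewrite Rabs_mult, Hdt', Ha; apply Rle_refl])
    residual_flux_bound).
  pose proof (Rmult_le_of_Rabs_le (- (sign beta * dt * beta)) (dt * Rabs beta) _ _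
    ltac:(rewrite Rabs_Ropp, Rmult_assoc; eapply Rle_trans;
          [apply Rabs_sign_mul_le | rewrite Rabs_mult, Hdt'; apply Rle_refl])
    residual_dispersion_bound).
  pose proof (Rmult_le_of_Rabs_le (2 * Kc * dt * (alpha / 6)) (2 * Kc * dt * (Rabs alpha / 6)) _ _
    ltac:(rewrite !Rabs_mult, H2, HKc', Hdt', Ha; apply Rle_refl) flux_gradient_bound).
  pose proof (Rmult_le_of_Rabs_le (- (2 * Kc * dt)) (2 * Kc * dt) _ _
    ltac:(rewrite Rabs_Ropp, !Rabs_mult, H2, HKc', Hdt'; apply Rle_refl) residual_average_bound).
  pose proof (Rabs_pos alpha). pose proof (Rabs_pos beta).
  assert (HM1 : 0 <= M1).
  { pose proof (Hw01 0%Z). pose proof (Rabs_pos (w1 0%Z - w0 0%Z)).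
    apply (Rmult_le_reg_l dt); lra. }
  assert (HA0 : 0 <= A0) by (apply period_sum_sq_nonneg).
  assert (HA1 : 0 <= A1) by (apply period_sum_sq_nonneg).
  assert (HB0 : 0 <= B0) by (apply period_sum_sq_nonneg).
  assert (HB1 : 0 <= B1) by (apply period_sum_sq_nonneg).
  assert (HT1 : 0 <= T1) by (apply period_sum_sq_nonneg).
  assert (HT2 : 0 <= T2) by (apply period_sum_sq_nonneg).
  assert (Hslack : forall c, 0 <= c ->
            0 <= dt * ((Rabs alpha * M1 / 4 + Rabs alpha * c / 12 + Kc * Rabs alpha * c / 6
                        + Kc / 2) * (B0 + B1)
                       + (Rabs beta / 4 + Kc * Rabs alpha * c / 6) * (A0 + A1)
                       + (Rabs alpha * c / 6 + Kc) * T2 + Rabs beta / 2 * T1))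
    by (intros c Hc; repeat (apply Rplus_le_le_0_compat || apply Rmult_le_pos); lra).
  specialize (Hslack cG HcG).
  unfold energy_growth, energy_source. fold cG. rewrite error_energy_difference. lra.
Qed.

End EnergyStep.

Lemma implicit_step_bound E E' Y z : 0 <= z <= 1 / 2 -> 0 <= E -> 0 <= Y ->
  E' - E <= z * (E + E') + Y -> E' <= (1 + 4 * z) * E + 2 * Y.
Proof.
  intros Hz HE HY H.
  assert (H' : E' * (1 - z) <= E * (1 + z) + Y) by lra.
  apply Rmult_le_reg_r with (1 - z); [lra|].
  eapply Rle_trans; [exact H'|].
  assert (0 <= E * (2 * z * (1 - 2 * z))) by (apply Rmult_le_pos; [lra | apply Rmult_le_pos; lra]).
  assert (0 <= Y * (1 - 2 * z)) by (apply Rmult_le_pos; lra).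
  nra.
Qed.

Lemma pow_one_plus_le_exp a n : 0 <= a -> (1 + a) ^ n <= exp (INR n * a).
Proof.
  intros Ha. induction n as [|n IH].
  - simpl. rewrite Rmult_0_l, exp_0. lra.
  - rewrite S_INR, Rmult_plus_distr_r, Rmult_1_l, exp_plus. simpl. rewrite Rmult_comm.
    apply Rmult_le_compat; [apply pow_le; lra | lra | exact IH | apply exp_ineq1_le].
Qed.

Lemma discrete_gronwall (En : nat -> R) a Y N : 0 <= a -> 0 <= Y -> En O = 0 ->
  (forall n, (n < N)%nat -> En (S n) <= (1 + a) * En n + Y) ->
  forall n, (n <= N)%nat -> En n <= INR n * Y * (1 + a) ^ n.
Proof.
  intros Ha HY H0 Hstep n. induction n as [|n IH]; intros Hn.
  - rewrite H0. simpl. lra.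
  - specialize (IH ltac:(lia)). specialize (Hstep n ltac:(lia)).
    assert (Hp : 1 <= (1 + a) ^ n) by (apply pow_R1_Rle; lra).
    assert ((1 + a) * En n <= (1 + a) * (INR n * Y * (1 + a) ^ n))
      by (apply Rmult_le_compat_l; lra).
    assert (Y * 1 <= Y * ((1 + a) * (1 + a) ^ n)) by (apply Rmult_le_compat_l; nra).
    rewrite S_INR. simpl pow. lra.
Qed.

(** * Convergence *)

(* The weight required by [error_energy_coercive] for errors bounded by [R0 + r]. *)
Definition energy_weight (alpha r R0 : R) : R := Rabs alpha / 6 * (3 * r + (R0 + r)) + 1.

Definition coercivity_constant (beta : R) : R := Rmin 1 (Rabs beta / 2).

Definition growth_rate (alpha beta r R0 Mb : R) : R :=
  energy_growth alpha beta r R0 Mb (energy_weight alpha r R0) / coercivity_constant beta.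

(* The Gronwall bound [T * 4 src * K (Ct eps)^2 * exp (4 lam T)] on the energy, times [dx / c0],
   divided by [eps^2], using [K dx = L]. *)
Definition error_constant (L T alpha beta r R0 Mb : R) : R :=
  4 * T * energy_source alpha beta r R0 (energy_weight alpha r R0) * L
  * consistency_constant alpha beta Mb ^ 2 * exp (4 * growth_rate alpha beta r R0 Mb * T)
  / coercivity_constant beta.

Lemma coercivity_constant_pos beta : beta <> 0 -> 0 < coercivity_constant beta.
Proof.
  intros Hb. unfold coercivity_constant. apply Rmin_glb_lt; [lra|].
  pose proof (Rabs_pos_lt beta Hb). lra.
Qed.

Lemma energy_constants_nonneg alpha beta r R0 M1 Kc : 0 <= r -> 0 <= R0 -> 0 <= M1 -> 0 <= Kc ->
  0 <= energy_growth alpha beta r R0 M1 Kc /\ 0 <= energy_source alpha beta r R0 Kc.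
Proof.
  intros Hr HR0 HM1 HKc. unfold energy_growth, energy_source, flux_constant.
  pose proof (Rabs_pos alpha). pose proof (Rabs_pos beta).
  split; repeat (apply Rplus_le_le_0_compat || apply Rmult_le_pos); lra.
Qed.

Lemma energy_weight_nonneg alpha r R0 : 0 <= r -> 0 <= R0 -> 0 <= energy_weight alpha r R0.
Proof. intros Hr HR0. unfold energy_weight. pose proof (Rabs_pos alpha). nra. Qed.

Lemma growth_rate_nonneg alpha beta r R0 Mb : 0 <= r -> 0 <= R0 -> 0 <= Mb -> beta <> 0 ->
  0 <= growth_rate alpha beta r R0 Mb.
Proof.
  intros Hr HR0 HMb Hbeta. apply Rdiv_le_0_compat; [|apply coercivity_constant_pos, Hbeta].
  apply energy_constants_nonneg, energy_weight_nonneg; auto.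
Qed.

Lemma gnorm_sq K dx v : 0 <= dx -> gnorm K dx v ^ 2 = dx * period_sum K (fun k => v k ^ 2).
Proof.
  intros Hdx. unfold gnorm, period_sum. rewrite pow2_sqrt.
  - rewrite scal_sum. reflexivity.
  - apply cond_pos_sum. intros. apply Rmult_le_pos; [apply pow2_ge_0 | exact Hdx].
Qed.

Section Convergence.
Variables (D : derivative_array) (L T alpha beta r R0 Mb dx dt : R) (K N : nat)
  (U : nat -> grid).
Hypotheses (HD : partial_tower D) (HB : partials_bounded D 3 6 T Mb) (HMb : 0 <= Mb)
  (Hkdv : solves_kdv alpha beta T D) (Hper : forall t x, D O O t (x + L) = D O O t x)
  (Hr : forall t x, 0 <= t <= T -> Rabs (D O O t x) <= r) (Hbeta : beta <> 0)
  (HK : (1 <= K)%nat) (Hdx : 0 < dx) (HL : INR K * dx = L) (Hdt : 0 < dt) (HN : INR N * dt <= T)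
  (HUper : forall n, periodic K (U n)) (HU0 : forall k, U O k = D O O 0 (IZR k * dx))
  (Hsteps : forall n, (n < N)%nat -> scheme_step alpha beta dx dt (U n) (U (S n)))
  (HUb : forall n, (n <= N)%nat -> forall k, Rabs (U n k) <= R0)
  (Hrate : dt * growth_rate alpha beta r R0 Mb <= 1 / 2).

Let w n := grid_sample D (INR n * dt) dx.
Let e n := fun k => U n k - w n k.
Let Kc := energy_weight alpha r R0.
Let c0 := coercivity_constant beta.
Let lam := growth_rate alpha beta r R0 Mb.
Let src := energy_source alpha beta r R0 Kc.
Let eps := dt ^ 2 + dx ^ 2.
Let W := INR K * (consistency_constant alpha beta Mb * eps) ^ 2.
Let En n := error_energy K dx alpha beta Kc (e n) (w n).
Let A n := period_sum K (fun k => e n k ^ 2).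
Let B n := period_sum K (fun k => dplus_x dx (e n) k ^ 2).

Lemma time_grid_in_range n : (n <= N)%nat -> 0 <= INR n * dt <= T.
Proof.
  intros Hn. split; [apply Rmult_le_pos; [apply pos_INR | lra]|].
  eapply Rle_trans; [|exact HN]. apply Rmult_le_compat_r; [lra | apply le_INR, Hn].
Qed.

Lemma r_nonneg : 0 <= r.
Proof.
  pose proof (time_grid_in_range O ltac:(lia)) as Ht. simpl INR in Ht. rewrite Rmult_0_l in Ht.
  pose proof (Hr 0 0 Ht). pose proof (Rabs_pos (D O O 0 0)). lra.
Qed.

Lemma R0_nonneg : 0 <= R0.
Proof. pose proof (HUb O ltac:(lia) 0%Z). pose proof (Rabs_pos (U O 0%Z)). lra. Qed.

Lemma exact_sample_bound n k : (n <= N)%nat -> Rabs (w n k) <= r.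
Proof. intros Hn. apply Hr, time_grid_in_range, Hn. Qed.

Lemma periodic_exact_sample n : periodic K (w n).
Proof.
  intros k. unfold w, grid_sample. rewrite plus_IZR, <- INR_IZR_INZ.
  replace ((IZR k + INR K) * dx) with (IZR k * dx + L) by (rewrite <- HL; ring). apply Hper.
Qed.

Lemma error_energy_lower n : (n <= N)%nat -> c0 * (A n + B n) <= En n.
Proof.
  intros Hn.
  assert (Hc := error_energy_coercive K dx alpha beta Kc (e n) (w n) r (R0 + r)
                  (fun k => exact_sample_bound n k Hn)).
  assert (HA : 0 <= A n) by (apply period_sum_sq_nonneg).
  assert (HB' : 0 <= B n) by (apply period_sum_sq_nonneg).
  assert (c0 <= 1) by apply Rmin_l. assert (c0 <= Rabs beta / 2) by apply Rmin_r.
  assert (c0 * A n <= 1 * A n) by (apply Rmult_le_compat_r; lra).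
  assert (c0 * B n <= Rabs beta / 2 * B n) by (apply Rmult_le_compat_r; lra).
  enough (A n + Rabs beta / 2 * B n <= En n) by lra.
  rewrite Rplus_comm. apply Hc; [|unfold Kc, energy_weight; lra].
  intros k. unfold e. eapply Rle_trans; [apply Rabs_triang|]. rewrite Rabs_Ropp.
  pose proof (HUb n Hn k). pose proof (exact_sample_bound n k Hn). lra.
Qed.

Lemma error_energy_initial : En O = 0.
Proof.
  assert (He : forall k, e O k = 0).
  { intros k. unfold e, w, grid_sample. rewrite HU0. simpl INR. rewrite Rmult_0_l. ring. }
  unfold En, error_energy.
  rewrite (period_sum_ext K _ (fun _ => 0))
    by (intros k; unfold dplus_x; rewrite !He; unfold Rdiv; ring).
  rewrite (period_sum_ext K (fun k => cubic_remainder _ (e O k)) (fun _ => 0))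
    by (intros k; rewrite He; unfold cubic_remainder; ring).
  rewrite (period_sum_ext K (fun k => e O k ^ 2) (fun _ => 0)) by (intros k; rewrite He; ring).
  rewrite period_sum_const by auto. ring.
Qed.

Lemma residual_energy_bound n : (n < N)%nat ->
  period_sum K (fun k => scheme_residual alpha beta dx dt (w n) (w (S n)) k ^ 2) <= W /\
  period_sum K (fun k => dplus_x dx (scheme_residual alpha beta dx dt (w n) (w (S n))) k ^ 2) <= W.
Proof.
  intros Hn.
  assert (Hw : w (S n) = grid_sample D (INR n * dt + dt) dx)
    by (unfold w; rewrite S_INR; f_equal; ring).
  pose proof (time_grid_in_range (S n) ltac:(lia)) as HT. rewrite S_INR in HT.
  pose proof (grid_sample_residual_bound D T Mb alpha beta dx dt (INR n * dt) HD HB HMb Hkdv Hdx Hdt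
                ltac:(apply Rmult_le_pos; [apply pos_INR | lra]) ltac:(lra)) as Hres.
  assert (HW : W = period_sum K (fun _ => (consistency_constant alpha beta Mb * eps) ^ 2))
    by (rewrite period_sum_const; auto).
  rewrite Hw, HW.
  split; apply period_sum_le; intros k; rewrite <- (pow2_abs (_ k));
    apply pow_incr; split; try apply Rabs_pos; apply (Hres k).
Qed.

Lemma exact_sample_increment n k : (n < N)%nat -> Rabs (w (S n) k - w n k) <= dt * Mb.
Proof.
  intros Hn. unfold w, grid_sample.
  pose proof (time_grid_in_range (S n) ltac:(lia)) as HT. rewrite S_INR in HT |- *.
  pose proof (time_grid_in_range n ltac:(lia)).
  replace (dt * Mb) with (Mb * (INR n * dt + dt - INR n * dt)) by ring.
  replace ((INR n + 1) * dt) with (INR n * dt + dt) by ring.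
  apply (time_increment_bound D 3 6 T Mb); auto; lia || lra.
Qed.

Lemma energy_growth_le_rate n : (n < N)%nat ->
  energy_growth alpha beta r R0 Mb Kc * (A n + A (S n) + B n + B (S n)) <= lam * (En n + En (S n)).
Proof.
  intros Hn.
  assert (Hc0 : 0 < c0) by (apply coercivity_constant_pos, Hbeta).
  pose proof (error_energy_lower n ltac:(lia)). pose proof (error_energy_lower (S n) ltac:(lia)).
  unfold lam, growth_rate. fold Kc c0.
  replace (energy_growth alpha beta r R0 Mb Kc / c0 * (En n + En (S n)))
    with (energy_growth alpha beta r R0 Mb Kc * ((En n + En (S n)) / c0)) by (field; lra).
  apply Rmult_le_compat_l; [apply energy_constants_nonneg, energy_weight_nonneg;
                            auto using r_nonneg, R0_nonneg|].
  apply (Rmult_le_reg_l c0); [exact Hc0|].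
  replace (c0 * ((En n + En (S n)) / c0)) with (En n + En (S n)) by (field; lra). nra.
Qed.

Lemma error_energy_recursion n : (n < N)%nat ->
  En (S n) <= (1 + 4 * (lam * dt)) * En n + dt * (4 * src * W).
Proof.
  intros Hn.
  pose proof r_nonneg. pose proof R0_nonneg.
  assert (HKc : 0 <= Kc) by (apply energy_weight_nonneg; auto).
  destruct (energy_constants_nonneg alpha beta r R0 Mb Kc) as [_ Hs]; auto. fold src in Hs.
  assert (Hlam : 0 <= lam) by (apply growth_rate_nonneg; auto).
  assert (HW : 0 <= W) by (apply Rmult_le_pos; [apply pos_INR | apply pow2_ge_0]).
  pose proof (error_energy_step K dx dt alpha beta r R0 Mb Kc (U n) (U (S n)) (w n) (w (S n))
    HK Hdx Hdt HKc (HUper n) (HUper (S n)) (periodic_exact_sample n) (periodic_exact_sample (S n))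
    (Hsteps n Hn) (HUb n ltac:(lia)) (HUb (S n) ltac:(lia))
    (fun k => exact_sample_bound n k ltac:(lia)) (fun k => exact_sample_bound (S n) k ltac:(lia))
    (fun k => exact_sample_increment n k Hn)) as Hstep.
  destruct (residual_energy_bound n Hn) as [HT1 HT2].
  set (T12 := period_sum K (fun k => scheme_residual alpha beta dx dt (w n) (w (S n)) k ^ 2)
              + period_sum K (fun k =>
                  dplus_x dx (scheme_residual alpha beta dx dt (w n) (w (S n))) k ^ 2)).
  change (En (S n) - En n
          <= dt * (energy_growth alpha beta r R0 Mb Kc * (A n + A (S n) + B n + B (S n))
                   + src * T12)) in Hstep.
  pose proof (energy_growth_le_rate n Hn).
  assert (src * T12 <= src * (2 * W)) by (apply Rmult_le_compat_l; [exact Hs | unfold T12; lra]).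
  replace (dt * (4 * src * W)) with (2 * (dt * (src * (2 * W)))) by ring.
  apply implicit_step_bound.
  - split; [apply Rmult_le_pos; lra | rewrite Rmult_comm; exact Hrate].
  - eapply Rle_trans; [|apply (error_energy_lower n); lia].
    apply Rmult_le_pos; [apply Rlt_le, coercivity_constant_pos, Hbeta|].
    apply Rplus_le_le_0_compat; apply period_sum_sq_nonneg.
  - apply Rmult_le_pos; [lra|]. apply Rmult_le_pos; lra.
  - eapply Rle_trans; [exact Hstep|].
    replace (lam * dt * (En n + En (S n)) + dt * (src * (2 * W)))
      with (dt * (lam * (En n + En (S n)) + src * (2 * W))) by ring.
    apply Rmult_le_compat_l; lra.
Qed.

Lemma error_energy_bound m : (m <= N)%nat -> En m <= T * (4 * src * W) * exp (4 * lam * T).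
Proof.
  intros Hm.
  pose proof r_nonneg. pose proof R0_nonneg.
  assert (HKc : 0 <= Kc) by (unfold Kc, energy_weight; pose proof (Rabs_pos alpha); nra).
  destruct (energy_constants_nonneg alpha beta r R0 Mb Kc) as [Hg Hs]; auto. fold src in Hs.
  assert (Hlam : 0 <= lam)
    by (apply Rdiv_le_0_compat; [exact Hg | apply coercivity_constant_pos, Hbeta]).
  assert (HY : 0 <= 4 * src * W)
    by (apply Rmult_le_pos; [lra | apply Rmult_le_pos; [apply pos_INR | apply pow2_ge_0]]).
  pose proof (discrete_gronwall En (4 * (lam * dt)) (dt * (4 * src * W)) N
    ltac:(apply Rmult_le_pos; [lra | apply Rmult_le_pos; lra]) ltac:(apply Rmult_le_pos; lra)
    error_energy_initial error_energy_recursion m Hm) as Hgr.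
  pose proof (time_grid_in_range m Hm) as Htm.
  assert (Hexp : (1 + 4 * (lam * dt)) ^ m <= exp (4 * lam * T)).
  { eapply Rle_trans;
      [apply pow_one_plus_le_exp; apply Rmult_le_pos; [lra | apply Rmult_le_pos; lra]|].
    assert (Hle : INR m * (4 * (lam * dt)) <= 4 * lam * T) by nra.
    destruct (Rle_lt_or_eq_dec _ _ Hle) as [Hlt | ->]; [apply Rlt_le, exp_increasing, Hlt | lra]. }
  eapply Rle_trans; [exact Hgr|].
  replace (INR m * (dt * (4 * src * W))) with (INR m * dt * (4 * src * W)) by ring.
  apply Rmult_le_compat; [| apply pow_le; nra | apply Rmult_le_compat_r; lra | exact Hexp].
  apply Rmult_le_pos; lra.
Qed.

Lemma error_H1_bound m : (m <= N)%nat ->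
  gnorm_H1 K dx (e m) <= sqrt (error_constant L T alpha beta r R0 Mb) * eps.
Proof.
  intros Hm.
  assert (Hc0 : 0 < c0) by (apply coercivity_constant_pos, Hbeta).
  pose proof (error_energy_lower m Hm) as Hlow. pose proof (error_energy_bound m Hm) as Hup.
  assert (HA : 0 <= A m) by (apply period_sum_sq_nonneg).
  assert (HB' : 0 <= B m) by (apply period_sum_sq_nonneg).
  assert (Heps : 0 <= eps)
    by (unfold eps; pose proof (pow2_ge_0 dt); pose proof (pow2_ge_0 dx); lra).
  assert (HQ : dx * (A m + B m) <= error_constant L T alpha beta r R0 Mb * eps ^ 2).
  { apply Rle_trans with (dx * (T * (4 * src * W) * exp (4 * lam * T) / c0)).
    - apply Rmult_le_compat_l; [lra|]. apply (Rmult_le_reg_l c0); [lra|].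
      replace (c0 * (T * (4 * src * W) * exp (4 * lam * T) / c0))
        with (T * (4 * src * W) * exp (4 * lam * T)) by (field; lra). lra.
    - right. unfold error_constant, W. fold Kc src lam c0. rewrite <- HL. field. lra. }
  unfold gnorm_H1. rewrite !gnorm_sq by lra.
  rewrite <- (sqrt_pow2 eps Heps), <- sqrt_mult_alt.
  - apply sqrt_le_1_alt. fold (A m) (B m). lra.
  - assert (0 < eps ^ 2) by (unfold eps; pose proof (pow_lt dt 2 Hdt); pose proof (pow2_ge_0 dx);
                             apply pow_lt; lra).
    assert (0 <= dx * (A m + B m)) by (apply Rmult_le_pos; lra). nra.
Qed.

End Convergence.

Lemma solves_kdv_of_Derive D alpha beta T : partial_tower D ->
  (forall t x, 0 <= t <= T ->
     Derive (fun s => D O O s x) t =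
       - alpha * D O O t x * Derive (fun y => D O O t y) x
       + beta * Derive_n (fun y => D O O t y) 3 x) ->
  solves_kdv alpha beta T D.
Proof.
  intros HD Hpde t x Ht.
  rewrite <- (is_derive_unique _ _ _ (proj1 (HD O O t x))),
          <- (is_derive_unique _ _ _ (proj2 (HD O O t x))).
  pose proof (derivative_tower_Derive_n 3 _ (derivative_tower_space D O O t 3 HD) 3 ltac:(lia) x)
    as H3.
  unfold space_tower in H3. simpl Nat.add in H3.
  rewrite <- H3. apply Hpde, Ht.
Qed.

Lemma smooth_periodic_solution u L T alpha beta : 0 < L -> smooth2 u ->
  (forall t x, u t (x + L) = u t x) ->
  (forall t x, 0 <= t <= T ->
     Derive (fun s => u s x) t =
       - alpha * u t x * Derive (fun y => u t y) x + beta * Derive_n (fun y => u t y) 3 x) ->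
  exists D Mb, D O O = u /\ partial_tower D /\ (forall t x, D O O t (x + L) = D O O t x) /\
    solves_kdv alpha beta T D /\ 0 <= Mb /\ partials_bounded D 3 6 T Mb.
Proof.
  intros HL [D [HD0 HD]] Hper Hpde. subst u.
  assert (Htower : partial_tower D) by (intros i j t x; split; apply HD).
  destruct (periodic_partials_bounded D L T 3 6 HL Htower Hper) as [Mb [HMb HB]].
  { intros i j [t x]. apply HD. }
  exists D, Mb. split; [reflexivity|]. split; [exact Htower|]. split; [exact Hper|].
  split; [exact (solves_kdv_of_Derive D alpha beta T Htower Hpde) | split; assumption].
Qed.

Lemma gnorm_inf_bound K v B : (0 < K)%nat -> periodic K v -> gnorm_inf K v <= B ->
  forall k, Rabs (v k) <= B.
Proof.
  intros HK Hv Hg k.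
  set (Kz := Z.of_nat K). set (i := ((k - 1) mod Kz + 1)%Z).
  assert (Hi : (1 <= i <= Kz)%Z)
    by (unfold i; pose proof (Z.mod_pos_bound (k - 1) Kz ltac:(lia)); lia).
  assert (Hk : k = (i + ((k - 1) / Kz) * Kz)%Z)
    by (unfold i; pose proof (Z.div_mod (k - 1) Kz ltac:(lia)); lia).
  assert (Hshift : forall j (n : nat), v (j + Z.of_nat n * Kz)%Z = v j).
  { intros j n. induction n as [|n IH]; [f_equal; lia|].
    replace (j + Z.of_nat (S n) * Kz)%Z with (j + Z.of_nat n * Kz + Z.of_nat K)%Z by lia.
    rewrite Hv. exact IH. }
  assert (Hper : v k = v i).
  { destruct (Z_le_gt_dec 0 ((k - 1) / Kz)) as [Hq|Hq].
    - rewrite Hk, <- (Z2Nat.id ((k - 1) / Kz) Hq). apply Hshift.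
    - rewrite <- (Hshift k (Z.to_nat (- ((k - 1) / Kz)))). f_equal. lia. }
  rewrite Hper. eapply Rle_trans; [|exact Hg]. unfold gnorm_inf.
  replace i with (Z.of_nat (Z.to_nat i)) by lia.
  apply (fold_right_Rmax_ge (fun j => Rabs (v (Z.of_nat j)))), in_seq. lia.
Qed.

Lemma uniform_grid L T K M : 0 < L -> 0 < T -> (0 < K)%nat -> (0 < M)%nat ->
  0 < L / INR K /\ 0 < T / INR M /\ INR K * (L / INR K) = L /\
  forall n, (n <= M)%nat -> INR n * (T / INR M) <= T.
Proof.
  intros HL HT HK HM.
  assert (HKpos : 0 < INR K) by (apply lt_0_INR; lia).
  assert (HMpos : 0 < INR M) by (apply lt_0_INR; lia).
  repeat split; try (apply Rdiv_lt_0_compat; lra); [field; lra|].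
  intros n Hn. replace T with (INR M * (T / INR M)) at 2 by (field; lra).
  apply Rmult_le_compat_r; [apply Rlt_le, Rdiv_lt_0_compat; lra | apply le_INR, Hn].
Qed.

Lemma iterates_bounded K (U : nat -> grid) M0 r q : (0 < K)%nat -> (forall n, periodic K (U n)) ->
  0 <= r -> 1 < q -> (forall m, (m <= M0)%nat -> gnorm_inf K (U m) <= r) ->
  gnorm_inf K (U (S M0)) <= q * r -> forall n, (n <= S M0)%nat -> forall k, Rabs (U n k) <= q * r.
Proof.
  intros HK HU Hr Hq Hbnd Hlast n Hn. apply (gnorm_inf_bound K); [exact HK | apply HU |].
  destruct (Nat.eq_dec n (S M0)) as [->|Hne]; [exact Hlast|].
  eapply Rle_trans; [apply Hbnd; lia | nra].
Qed.

Lemma step_size_rate lam dt : 0 <= lam -> dt <= 1 / (2 * lam + 2) -> dt * lam <= 1 / 2.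
Proof.
  intros Hlam Hdt.
  apply Rle_trans with (1 / (2 * lam + 2) * lam); [apply Rmult_le_compat_r; lra|].
  apply (Rmult_le_reg_r (2 * lam + 2)); [lra|]. field_simplify; lra.
Qed.

Theorem theorem3p2 (L T alpha beta q r : R) (u : R -> R -> R) :
  0 < L -> 0 < T -> beta <> 0 -> 1 < q ->
  smooth2 u ->
  (forall t x, u t (x + L) = u t x) ->
  (forall t x, 0 <= t <= T ->
     Derive (fun s => u s x) t =
       - alpha * u t x * Derive (fun y => u t y) x
       + beta * Derive_n (fun y => u t y) 3 x) ->
  (exists s, s < r /\ forall t x, 0 <= t <= T -> Rabs (u t x) <= s) ->
  exists C delta : R, 0 < C /\ 0 < delta /\
  forall (K M M0 : nat) (U : nat -> Z -> R),
    (0 < K)%nat -> (0 < M)%nat -> (M0 < M)%nat ->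
    let dx := L / INR K in
    let dt := T / INR M in
    dt <= dx -> dt <= delta ->
    (forall n k, U n (k + Z.of_nat K)%Z = U n k) ->
    (forall k, U O k = u 0 (IZR k * dx)) ->
    (forall n, (n < M0)%nat -> scheme_step alpha beta dx dt (U n) (U (S n))) ->
    (forall m, (m <= M0)%nat -> gnorm_inf K (U m) <= r) ->
    dt < Rmin (scheme_eps1 alpha beta q r dx) (scheme_eps2 alpha beta q r dx) ->
    scheme_step alpha beta dx dt (U M0) (U (S M0)) ->
    gnorm_inf K (U (S M0)) <= q * r ->
    forall m, (m <= S M0)%nat ->
      gnorm_H1 K dx (fun k => U m k - u (INR m * dt) (IZR k * dx))
        <= C * (dt ^ 2 + dx ^ 2).
Proof.
  intros HL HT Hbeta Hq Hsmooth Hper Hpde [s [Hsr Hs]].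
  destruct (smooth_periodic_solution u L T alpha beta HL Hsmooth Hper Hpde)
    as (D & Mb & <- & HD & HDper & Hkdv & HMb & HB).
  assert (Hr : 0 <= r) by (pose proof (Hs 0 0 ltac:(lra)); pose proof (Rabs_pos (D O O 0 0)); lra).
  set (lam := growth_rate alpha beta r (q * r) Mb).
  assert (Hlam : 0 <= lam) by (apply growth_rate_nonneg; auto; nra).
  exists (sqrt (error_constant L T alpha beta r (q * r) Mb) + 1), (1 / (2 * lam + 2)).
  split; [pose proof (sqrt_pos (error_constant L T alpha beta r (q * r) Mb)); lra|].
  split; [apply Rdiv_lt_0_compat; lra|].
  (* [dt <= dx] and the bound by [scheme_eps1], [scheme_eps2] only ensure that the step producing
     [U (S M0)] is solvable; that solution is given here. *)
  intros K M M0 U HK HM HM0 dx dt _ Hdelta HUper HU0 Hsteps Hbnd _ Hlast Hlastbnd m Hm.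
  destruct (uniform_grid L T K M HL HT HK HM) as (Hdx & Hdt & HKdx & Htime).
  eapply Rle_trans.
  - refine (error_H1_bound D L T alpha beta r (q * r) Mb dx dt K (S M0) U
              HD HB HMb Hkdv HDper _ Hbeta ltac:(lia) Hdx HKdx Hdt (Htime (S M0) HM0)
              HUper HU0 _ _ _ m Hm).
    + intros t x Ht. pose proof (Hs t x Ht). lra.
    + intros n Hn. destruct (Nat.eq_dec n M0) as [->|Hne]; auto. apply Hsteps. lia.
    + exact (iterates_bounded K U M0 r q HK HUper Hr Hq Hbnd Hlastbnd).
    + apply step_size_rate; assumption.
  - apply Rmult_le_compat_r; [pose proof (pow2_ge_0 dt); pose proof (pow2_ge_0 dx); lra | lra].
Qed.
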